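(* Every smooth planar stationary magnetic field with an additional symmetry is, up to the symmetries of the Hall-MHD / electron-MHD systems (translations, rotations, reflections), of one of the forms $$\mathring{\mathbf B}=f(y)\partial_x,\qquad \mathring{\mathbf B}=(c_1y+c_0)\partial_x+d\,\partial_y,\qquad \mathring{\mathbf B}=g(x^2+y^2)(x\partial_y-y\partial_x),$$ where $f,g$ are smooth functions and $c_0,c_1,d\in\mathbb R$.
   Context: A planar stationary magnetic field with an additional symmetry is a time-independent vector field $\mathring{\mathbf B}$ on $\mathbb R^3$ (coordinates $(x,y,z)$) such that: $\nabla\cdot\mathring{\mathbf B}=0$ and $(\nabla\times\mathring{\mathbf B})\times\mathring{\mathbf B}$ is a pure gradient (stationarity); $\mathring{\mathbf B}$ is independent of $z$ and $\mathring{\mathbf B}^z=0$ (planarity); and $\mathring{\mathbf B}^x\partial_x+\mathring{\mathbf B}^y\partial_y$, viewed as a vector field on $\mathbb R^2_{x,y}$, is invariant under a one-parameter family of isometries of $\mathbb R^2_{x,y}$. *)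

From Stdlib Require Import Reals List.
From Coquelicot Require Import Coquelicot.
Open Scope R_scope.

Definition fun3 := R -> R -> R -> R.

Inductive dir3 := DX | DY | DZ.

Definition pd3 (d : dir3) (f : fun3) : fun3 :=
  match d with
  | DX => fun x y z => Derive (fun t => f t y z) x
  | DY => fun x y z => Derive (fun t => f x t z) y
  | DZ => fun x y z => Derive (fun t => f x y t) z
  end.

Definition ex_pd3 (d : dir3) (f : fun3) : Prop :=
  match d with
  | DX => forall x y z, ex_derive (fun t => f t y z) x
  | DY => forall x y z, ex_derive (fun t => f x t z) y
  | DZ => forall x y z, ex_derive (fun t => f x y t) z
  end.

Definition iter_pd3 (l : list dir3) (f : fun3) : fun3 := fold_right pd3 f l.

Definition continuous3 (f : fun3) : Prop :=
  forall x y z,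
    continuous (fun p : R * R * R => f (fst (fst p)) (snd (fst p)) (snd p)) (x, y, z).

Definition smooth3 (f : fun3) : Prop :=
  forall l : list dir3,
    continuous3 (iter_pd3 l f) /\ forall d, ex_pd3 d (iter_pd3 l f).

Definition smooth1 (f : R -> R) : Prop :=
  forall n : nat, forall x, ex_derive (Derive_n f n) x.

Record vfield3 := VF3 { Vx : fun3 ; Vy : fun3 ; Vz : fun3 }.

Definition smooth_vf3 (B : vfield3) : Prop :=
  smooth3 (Vx B) /\ smooth3 (Vy B) /\ smooth3 (Vz B).

Definition divergence (B : vfield3) : fun3 :=
  fun x y z => pd3 DX (Vx B) x y z + pd3 DY (Vy B) x y z + pd3 DZ (Vz B) x y z.

Definition curl (B : vfield3) : vfield3 :=
  VF3 (fun x y z => pd3 DY (Vz B) x y z - pd3 DZ (Vy B) x y z)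
      (fun x y z => pd3 DZ (Vx B) x y z - pd3 DX (Vz B) x y z)
      (fun x y z => pd3 DX (Vy B) x y z - pd3 DY (Vx B) x y z).

Definition cross (A B : vfield3) : vfield3 :=
  VF3 (fun x y z => Vy A x y z * Vz B x y z - Vz A x y z * Vy B x y z)
      (fun x y z => Vz A x y z * Vx B x y z - Vx A x y z * Vz B x y z)
      (fun x y z => Vx A x y z * Vy B x y z - Vy A x y z * Vx B x y z).

Definition is_gradient (F : vfield3) : Prop :=
  exists p : fun3, forall x y z,
    is_derive (fun t => p t y z) x (Vx F x y z) /\
    is_derive (fun t => p x t z) y (Vy F x y z) /\
    is_derive (fun t => p x y t) z (Vz F x y z).

Definition stationary (B : vfield3) : Prop :=
  (forall x y z, divergence B x y z = 0) /\ is_gradient (cross (curl B) B).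

Definition planar (B : vfield3) : Prop :=
  (forall x y z, Vz B x y z = 0) /\
  (forall x y z, Vx B x y z = Vx B x y 0 /\ Vy B x y z = Vy B x y 0).

Definition planar_part (B : vfield3) : R * R -> R * R :=
  fun p => (Vx B (fst p) (snd p) 0, Vy B (fst p) (snd p) 0).

(* An isometry of R^2 is an affine map p |-> Q p + b with Q orthogonal. *)
Record isom2 := mkIsom2 { Q11 : R ; Q12 : R ; Q21 : R ; Q22 : R ; T1 : R ; T2 : R }.

Definition orthogonal2 (g : isom2) : Prop :=
  Q11 g * Q11 g + Q21 g * Q21 g = 1 /\
  Q12 g * Q12 g + Q22 g * Q22 g = 1 /\
  Q11 g * Q12 g + Q21 g * Q22 g = 0.

Definition act (g : isom2) (p : R * R) : R * R :=
  (Q11 g * fst p + Q12 g * snd p + T1 g, Q21 g * fst p + Q22 g * snd p + T2 g).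

Definition lin (g : isom2) (v : R * R) : R * R :=
  (Q11 g * fst v + Q12 g * snd v, Q21 g * fst v + Q22 g * snd v).

Definition pushforward_eq (g : isom2) (V W : R * R -> R * R) : Prop :=
  forall p, W (act g p) = lin g (V p).

Definition invariant_under (g : isom2) (V : R * R -> R * R) : Prop :=
  pushforward_eq g V V.

Definition one_param_group (phi : R -> isom2) : Prop :=
  (forall t, orthogonal2 (phi t)) /\
  (forall p, act (phi 0) p = p) /\
  (forall s t p, act (phi (s + t)) p = act (phi s) (act (phi t) p)) /\
  (forall t, continuity_pt (fun s => Q11 (phi s)) t /\
             continuity_pt (fun s => Q12 (phi s)) t /\
             continuity_pt (fun s => Q21 (phi s)) t /\
             continuity_pt (fun s => Q22 (phi s)) t /\
             continuity_pt (fun s => T1 (phi s)) t /\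
             continuity_pt (fun s => T2 (phi s)) t) /\
  (exists t p, act (phi t) p <> p).

Definition has_additional_symmetry (V : R * R -> R * R) : Prop :=
  exists phi : R -> isom2, one_param_group phi /\ forall t, invariant_under (phi t) V.

Definition form_shear (W : R * R -> R * R) : Prop :=
  exists f : R -> R, smooth1 f /\ forall x y, W (x, y) = (f y, 0).

Definition form_affine (W : R * R -> R * R) : Prop :=
  exists c1 c0 d : R, forall x y, W (x, y) = (c1 * y + c0, d).

Definition form_rotational (W : R * R -> R * R) : Prop :=
  exists g : R -> R, smooth1 g /\
    forall x y, W (x, y) = (- (y * g (x ^ 2 + y ^ 2)), x * g (x ^ 2 + y ^ 2)).

(* The one-parameter group is a continuous homomorphism from R into the Euclidean group of the
   plane, and its linear part, being a square, is a rotation.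

   If no rotation occurs, the translation parts are additive and continuous, hence linear, so
   the field is invariant along a unit direction; in adapted coordinates it is [(a y, b y)].
   Incompressibility makes [b] constant and the force [(curl B) x B] being a gradient makes
   [a' b] constant, so either [b = 0] (a shear) or [a] is affine.

   Otherwise some [phi t0] is a nontrivial rotation; its centre is fixed by the whole group and
   the angles fill the circle, so the field is invariant under all rotations about the centre.
   Incompressibility kills the radial component, and the angular component is a smooth odd
   function of the radius, hence [r g (r^2)] with [g] smooth by Whitney's theorem, proved here
   from Hadamard's lemma and Borel's lemma. *)

From Stdlib Require Import Reals Lra Lia ZArith List FunctionalExtensionality Classical IndefiniteDescription.
From Coquelicot Require Import Coquelicot.
Open Scope R_scope.

(** * Derivatives of real functions *)

(* Coquelicot's generic lemmas do not unify with [Rplus], [Rmult] on [R -> R]. *)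
Lemma ex_derive_Rplus (f g : R -> R) x :
  ex_derive f x -> ex_derive g x -> ex_derive (fun y => f y + g y) x.
Proof. intros [a Ha] [b Hb]. exists (a + b). now apply (is_derive_plus (K := R_AbsRing) (V := R_NormedModule)). Qed.

Lemma ex_derive_Rcontinuous (f : R -> R) x : ex_derive f x -> continuous f x.
Proof. exact (ex_derive_continuous (K := R_AbsRing) (V := R_NormedModule) f x). Qed.

Lemma is_derive_Rconst (c x : R) : is_derive (fun _ => c) x 0.
Proof. exact (is_derive_const (K := R_AbsRing) (V := R_NormedModule) c x). Qed.

Lemma is_derive_Rid (x : R) : is_derive (fun y => y) x 1.
Proof. exact (is_derive_id (K := R_AbsRing) x). Qed.

Lemma is_derive_Rplus (f g : R -> R) (x a b : R) :
  is_derive f x a -> is_derive g x b -> is_derive (fun y => f y + g y) x (a + b).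
Proof. exact (is_derive_plus (K := R_AbsRing) (V := R_NormedModule) f g x a b). Qed.

Lemma is_derive_Rmult (f g : R -> R) (x a b : R) :
  is_derive f x a -> is_derive g x b -> is_derive (fun y => f y * g y) x (a * g x + f x * b).
Proof. intros Hf Hg. exact (is_derive_mult (K := R_AbsRing) f g x a b Hf Hg Rmult_comm). Qed.

Lemma is_derive_Rcomp (f g : R -> R) (x a b : R) :
  is_derive f (g x) a -> is_derive g x b -> is_derive (fun y => f (g y)) x (b * a).
Proof. exact (is_derive_comp (K := R_AbsRing) (V := R_NormedModule) f g x a b). Qed.

Lemma is_derive_Rext (f g : R -> R) (x a b : R) :
  (forall y, f y = g y) -> a = b -> is_derive f x a -> is_derive g x b.
Proof. intros E <-. exact (is_derive_ext f g x a E). Qed.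

Lemma is_derive_Rinv (x : R) : x <> 0 -> is_derive (fun y => / y) x (- / (x * x)).
Proof. intros Hx. auto_derive; [exact Hx | field; exact Hx]. Qed.

Lemma is_derive_affine a b x : is_derive (fun y => a * y + b) x a.
Proof. auto_derive; [exact I | ring]. Qed.

Lemma Derive_comp_affine f a b x : ex_derive f (a * x + b) ->
  Derive (fun y => f (a * y + b)) x = a * Derive f (a * x + b).
Proof.
  intros H. apply is_derive_unique.
  exact (is_derive_Rcomp f _ x _ _ (Derive_correct _ _ H) (is_derive_affine a b x)).
Qed.

Lemma zero_derive_const (f : R -> R) : (forall t : R, is_derive f t 0) -> forall x y : R, f x = f y.
Proof.
  intros H x y. destruct (MVT_gen f x y (fun _ => 0)) as [c [_ Hc]].
  - intros; apply H.
  - intros t _. apply continuity_pt_filterlim, ex_derive_Rcontinuous. exists 0. apply H.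
  - lra.
Qed.

Lemma const_derive_affine (f : R -> R) (k : R) : (forall t : R, is_derive f t k) -> forall t : R, f t = k * t + f 0.
Proof.
  intros H t.
  assert (H0 : forall s, is_derive (fun t => f t - k * t) s 0).
  { intros s. auto_derive.
    - exists k. apply H.
    - replace (Derive (fun x : R => f x) s) with k by (symmetry; apply is_derive_unique, H). ring. }
  pose proof (zero_derive_const _ H0 t 0). lra.
Qed.

(** * Smooth functions of one variable *)

(* Closure of [smooth1] under products and quotients is proved order by order,
   by induction on [n] for [derivable_upto n]. *)
Definition derivable_upto (n : nat) (f : R -> R) : Prop :=
  forall k, (k <= n)%nat -> forall x, ex_derive (Derive_n f k) x.

Lemma Derive_n_Derive f n : Derive_n (Derive f) n = Derive_n f (S n).
Proof. induction n as [|n IH]; simpl; [reflexivity | now rewrite IH]. Qed.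

Lemma derivable_upto_0 f : derivable_upto 0 f <-> forall x, ex_derive f x.
Proof.
  split.
  - intros H. exact (H 0%nat (le_n 0)).
  - intros H k Hk. replace k with 0%nat by lia. exact H.
Qed.

Lemma derivable_upto_S n f :
  derivable_upto (S n) f <-> (forall x, ex_derive f x) /\ derivable_upto n (Derive f).
Proof.
  split.
  - intros H. split.
    + apply (H 0%nat). lia.
    + intros k Hk x. rewrite Derive_n_Derive. apply H. lia.
  - intros [H1 H2] [|k] Hk x.
    + apply H1.
    + rewrite <- Derive_n_Derive. apply H2. lia.
Qed.

Lemma derivable_upto_ex n f : derivable_upto n f -> forall x, ex_derive f x.
Proof. intros H. apply (H 0%nat). lia. Qed.

Lemma derivable_upto_le m n f : (m <= n)%nat -> derivable_upto n f -> derivable_upto m f.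
Proof. intros Hmn H k Hk. apply H. lia. Qed.

Lemma derivable_upto_ext n f g : (forall x, f x = g x) -> derivable_upto n f -> derivable_upto n g.
Proof. intros E. now replace g with f by (apply functional_extensionality; exact E). Qed.

Lemma smooth1_derivable_upto f : smooth1 f <-> forall n, derivable_upto n f.
Proof.
  split.
  - intros H n k _. apply H.
  - intros H n. apply (H n n). lia.
Qed.

Lemma derivable_upto_plus n : forall f g,
  derivable_upto n f -> derivable_upto n g -> derivable_upto n (fun x => f x + g x).
Proof.
  induction n as [|n IH]; intros f g Hf Hg.
  - apply derivable_upto_0. intros x.
    apply ex_derive_Rplus; eapply derivable_upto_ex; eassumption.
  - apply derivable_upto_S in Hf as [Hf1 Hf2]. apply derivable_upto_S in Hg as [Hg1 Hg2].
    apply derivable_upto_S. split.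
    + intros x. now apply ex_derive_Rplus.
    + apply derivable_upto_ext with (fun x => Derive f x + Derive g x).
      * intros x. now rewrite Derive_plus.
      * now apply IH.
Qed.

Lemma derivable_upto_scal n : forall c f, derivable_upto n f -> derivable_upto n (fun x => c * f x).
Proof.
  induction n as [|n IH]; intros c f Hf.
  - apply derivable_upto_0. intros x. apply ex_derive_scal. eapply derivable_upto_ex; eassumption.
  - apply derivable_upto_S in Hf as [Hf1 Hf2]. apply derivable_upto_S. split.
    + intros x. now apply ex_derive_scal.
    + apply derivable_upto_ext with (fun x => c * Derive f x).
      * intros x. now rewrite Derive_scal.
      * now apply IH.
Qed.

Lemma derivable_upto_const n c : derivable_upto n (fun _ => c).
Proof.
  intros k _ x. destruct k as [|k].
  - apply ex_derive_const.
  - apply ex_derive_ext with (fun _ => 0); [intros; now rewrite Derive_n_const |].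
    apply ex_derive_const.
Qed.

Lemma derivable_upto_id n : derivable_upto n (fun x => x).
Proof.
  destruct n as [|n].
  - apply derivable_upto_0. intros x. apply ex_derive_id.
  - apply derivable_upto_S. split.
    + intros x. apply ex_derive_id.
    + apply derivable_upto_ext with (fun _ => 1).
      * intros x. now rewrite Derive_id.
      * apply derivable_upto_const.
Qed.

Lemma derivable_upto_mult n : forall f g,
  derivable_upto n f -> derivable_upto n g -> derivable_upto n (fun x => f x * g x).
Proof.
  induction n as [|n IH]; intros f g Hf Hg.
  - apply derivable_upto_0. intros x.
    apply ex_derive_mult; eapply derivable_upto_ex; eassumption.
  - assert (Hf' := derivable_upto_le n _ f (le_S _ _ (le_n n)) Hf).
    assert (Hg' := derivable_upto_le n _ g (le_S _ _ (le_n n)) Hg).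
    apply derivable_upto_S in Hf as [Hf1 Hf2]. apply derivable_upto_S in Hg as [Hg1 Hg2].
    apply derivable_upto_S. split.
    + intros x. now apply ex_derive_mult.
    + apply derivable_upto_ext with (fun x => Derive f x * g x + f x * Derive g x).
      * intros x. now rewrite Derive_mult.
      * apply derivable_upto_plus; now apply IH.
Qed.

Lemma derivable_upto_inv n : forall f,
  derivable_upto n f -> (forall x, f x <> 0) -> derivable_upto n (fun x => / f x).
Proof.
  induction n as [|n IH]; intros f Hf Hnz.
  - apply derivable_upto_0. intros x. apply ex_derive_inv; [eapply derivable_upto_ex; eassumption | apply Hnz].
  - assert (Hf' := derivable_upto_le n _ f (le_S _ _ (le_n n)) Hf).
    apply derivable_upto_S in Hf as [Hf1 Hf2]. apply derivable_upto_S. split.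
    + intros x. now apply ex_derive_inv.
    + apply derivable_upto_ext with (fun x => (-1) * (Derive f x * (/ f x * / f x))).
      * intros x. rewrite Derive_inv by easy. field. apply Hnz.
      * apply derivable_upto_scal, derivable_upto_mult; [easy |].
        apply derivable_upto_mult; now apply IH.
Qed.

Lemma derivable_upto_comp_affine n : forall a b f,
  derivable_upto n f -> derivable_upto n (fun x => f (a * x + b)).
Proof.
  induction n as [|n IH]; intros a b f Hf.
  - apply derivable_upto_0. intros x. apply ex_derive_comp.
    + eapply derivable_upto_ex; eassumption.
    + exists a. apply is_derive_affine.
  - apply derivable_upto_S in Hf as [Hf1 Hf2]. apply derivable_upto_S. split.
    + intros x. apply ex_derive_comp; [easy |]. exists a. apply is_derive_affine.
    + apply derivable_upto_ext with (fun x => a * Derive f (a * x + b)).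
      * intros x. now rewrite Derive_comp_affine.
      * now apply derivable_upto_scal, IH.
Qed.

Lemma smooth1_ext f g : (forall x, f x = g x) -> smooth1 f -> smooth1 g.
Proof. intros E. now replace g with f by (apply functional_extensionality; exact E). Qed.

Lemma smooth1_plus f g : smooth1 f -> smooth1 g -> smooth1 (fun x => f x + g x).
Proof. rewrite !smooth1_derivable_upto. intros; now apply derivable_upto_plus. Qed.

Lemma smooth1_scal c f : smooth1 f -> smooth1 (fun x => c * f x).
Proof. rewrite !smooth1_derivable_upto. intros; now apply derivable_upto_scal. Qed.

Lemma smooth1_const c : smooth1 (fun _ => c).
Proof. apply smooth1_derivable_upto. intros; apply derivable_upto_const. Qed.

Lemma smooth1_id : smooth1 (fun x => x).
Proof. apply smooth1_derivable_upto. intros; apply derivable_upto_id. Qed.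

Lemma smooth1_mult f g : smooth1 f -> smooth1 g -> smooth1 (fun x => f x * g x).
Proof. rewrite !smooth1_derivable_upto. intros; now apply derivable_upto_mult. Qed.

Lemma smooth1_inv f : smooth1 f -> (forall x, f x <> 0) -> smooth1 (fun x => / f x).
Proof. rewrite !smooth1_derivable_upto. intros; now apply derivable_upto_inv. Qed.

Lemma smooth1_comp_affine a b f : smooth1 f -> smooth1 (fun x => f (a * x + b)).
Proof. rewrite !smooth1_derivable_upto. intros; now apply derivable_upto_comp_affine. Qed.

Lemma smooth1_pow n : smooth1 (fun x => x ^ n).
Proof.
  induction n as [|n IH].
  - exact (smooth1_const 1).
  - exact (smooth1_mult _ _ smooth1_id IH).
Qed.

Lemma smooth1_Derive f : smooth1 f -> smooth1 (Derive f).
Proof. intros H n x. rewrite Derive_n_Derive. apply H. Qed.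

Lemma smooth1_Derive_n f n : smooth1 f -> smooth1 (Derive_n f n).
Proof. intros H. induction n as [|n IH]; [exact H | now apply smooth1_Derive]. Qed.

Lemma smooth1_ex_derive f x : smooth1 f -> ex_derive f x.
Proof. intros H. apply (H 0%nat). Qed.

Lemma smooth1_continuity_pt f x : smooth1 f -> continuity_pt f x.
Proof. intros H. now apply continuity_pt_filterlim, ex_derive_Rcontinuous, smooth1_ex_derive. Qed.

Lemma smooth1_of_is_derive (F : nat -> R -> R) :
  (forall n x, is_derive (F n) x (F (S n) x)) -> smooth1 (F 0%nat) /\ forall n, Derive_n (F 0%nat) n = F n.
Proof.
  intros H.
  assert (HD : forall n, Derive_n (F 0%nat) n = F n).
  { induction n as [|n IH]; [reflexivity |]. simpl. rewrite IH.
    apply functional_extensionality. intros x. apply is_derive_unique, H. }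
  split; [| exact HD]. intros n x. rewrite HD. exists (F (S n) x). apply H.
Qed.

(** * Flat functions and bump functions *)

Inductive is_poly_fun : (R -> R) -> Prop :=
| poly_const c : is_poly_fun (fun _ => c)
| poly_id : is_poly_fun (fun x => x)
| poly_plus p q : is_poly_fun p -> is_poly_fun q -> is_poly_fun (fun x => p x + q x)
| poly_mult p q : is_poly_fun p -> is_poly_fun q -> is_poly_fun (fun x => p x * q x).

Lemma is_poly_fun_derive p :
  is_poly_fun p -> exists p', is_poly_fun p' /\ forall y, is_derive p y (p' y).
Proof.
  induction 1 as [c | | p q _ [p' [Hp' Dp]] _ [q' [Hq' Dq]]
                      | p q Hp [p' [Hp' Dp]] Hq [q' [Hq' Dq]]].
  - exists (fun _ => 0). split; [constructor | intros; apply is_derive_Rconst].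
  - exists (fun _ => 1). split; [constructor | intros; apply is_derive_Rid].
  - exists (fun y => p' y + q' y). split; [now constructor |].
    intros y. now apply is_derive_Rplus.
  - exists (fun y => p' y * q y + p y * q' y). split; [repeat constructor; assumption |].
    intros y. now apply is_derive_Rmult.
Qed.

Lemma is_poly_fun_bound p :
  is_poly_fun p -> exists C m, 0 <= C /\ forall y, 1 <= y -> Rabs (p y) <= C * y ^ m.
Proof.
  induction 1 as [c | | p q _ [C1 [m1 [HC1 H1]]] _ [C2 [m2 [HC2 H2]]]
                      | p q _ [C1 [m1 [HC1 H1]]] _ [C2 [m2 [HC2 H2]]]].
  - exists (Rabs c), 0%nat. split; [apply Rabs_pos | intros y _; simpl; lra].
  - exists 1, 1%nat. split; [lra | intros y Hy; simpl; rewrite Rabs_right; lra].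
  - exists (C1 + C2), (m1 + m2)%nat. split; [lra |]. intros y Hy.
    pose proof (Rle_pow y m1 (m1 + m2) Hy ltac:(lia)).
    pose proof (Rle_pow y m2 (m1 + m2) Hy ltac:(lia)).
    pose proof (H1 y Hy). pose proof (H2 y Hy).
    eapply Rle_trans; [apply Rabs_triang | nra].
  - exists (C1 * C2), (m1 + m2)%nat. split; [nra |]. intros y Hy.
    rewrite Rabs_mult, pow_add.
    pose proof (H1 y Hy). pose proof (H2 y Hy).
    pose proof (Rabs_pos (p y)). pose proof (Rabs_pos (q y)).
    pose proof (pow_le y m1 ltac:(lra)). pose proof (pow_le y m2 ltac:(lra)).
    nra.
Qed.

Lemma pow_exp_neg_le k y : 0 < y -> y ^ k * exp (- y) <= INR (fact (S k)) / y.
Proof.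
  intros Hy.
  assert (Hf : 0 < INR (fact (S k))) by apply INR_fact_lt_0.
  assert (Hsum : 0 <= sum_f_R0 (fun j => y ^ j / INR (fact j)) k).
  { apply cond_pos_sum. intros j. apply Rdiv_le_0_compat; [apply pow_le; lra | apply INR_fact_lt_0]. }
  pose proof (exp_ge_taylor y (S k) ltac:(lra)) as H. rewrite tech5 in H.
  assert (Hle : y * y ^ k <= INR (fact (S k)) * exp y).
  { change (y * y ^ k) with (y ^ S k).
    replace (y ^ S k) with (y ^ S k / INR (fact (S k)) * INR (fact (S k))) by (field; lra).
    nra. }
  pose proof (exp_pos y).
  rewrite exp_Ropp. apply (Rmult_le_reg_r (exp y * y)); [nra |].
  replace (y ^ k * / exp y * (exp y * y)) with (y * y ^ k) by (field; lra).
  replace (INR (fact (S k)) / y * (exp y * y)) with (INR (fact (S k)) * exp y) by (field; lra).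
  exact Hle.
Qed.

Lemma poly_exp_inv_lim q : is_poly_fun q -> forall eps, 0 < eps -> exists delta, 0 < delta /\
  forall h, 0 < h < delta -> Rabs (q (/ h) * exp (- / h) / h) < eps.
Proof.
  intros Hq eps He.
  destruct (is_poly_fun_bound (fun y => y * q y) ltac:(repeat constructor; exact Hq))
    as [C [m [HC HB]]].
  set (K := INR (fact (S m))).
  assert (HK : 0 < K) by apply INR_fact_lt_0.
  assert (HCK : 0 < C * K + 1) by nra.
  exists (Rmin 1 (eps / (C * K + 1))). split.
  { apply Rmin_pos; [lra | now apply Rdiv_lt_0_compat]. }
  intros h [Hh1 Hh2].
  pose proof (Rmin_l 1 (eps / (C * K + 1))). pose proof (Rmin_r 1 (eps / (C * K + 1))).
  set (y := / h).
  assert (Hy1 : 1 < y).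
  { unfold y. rewrite <- Rinv_1. apply Rinv_lt_contravar; lra. }
  assert (Hy2 : C * K + 1 < eps * y).
  { unfold y. apply (Rmult_lt_reg_r h); [lra |].
    replace (eps * / h * h) with eps by (field; lra).
    apply (Rmult_lt_reg_r (/ (C * K + 1))); [now apply Rinv_0_lt_compat |].
    replace ((C * K + 1) * h * / (C * K + 1)) with h by (field; lra).
    unfold Rdiv in *. lra. }
  replace (q y * exp (- y) / h) with ((y * q y) * exp (- y)) by (unfold y; field; lra).
  rewrite Rabs_mult, (Rabs_right (exp (- y))) by (apply Rle_ge, Rlt_le, exp_pos).
  pose proof (HB y ltac:(lra)) as Hpoly.
  pose proof (pow_exp_neg_le m y ltac:(lra)) as Hexp. fold K in Hexp.
  pose proof (exp_pos (- y)).
  assert (Rabs (y * q y) * exp (- y) <= C * (y ^ m * exp (- y))) by nra.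
  assert (C * (y ^ m * exp (- y)) <= C * (K / y)) by (apply Rmult_le_compat_l; assumption).
  assert (C * (K / y) < eps).
  { apply (Rmult_lt_reg_r y); [lra |].
    replace (C * (K / y) * y) with (C * K) by (field; lra). lra. }
  lra.
Qed.

(* [flat q] is [q (1/x) e^(-1/x)] on [x > 0] and [0] elsewhere; all its derivatives have the same shape. *)
Definition flat (q : R -> R) (x : R) : R := if Rlt_dec 0 x then q (/ x) * exp (- / x) else 0.

Lemma flat_is_derive q :
  is_poly_fun q -> exists r, is_poly_fun r /\ forall x, is_derive (flat q) x (flat r x).
Proof.
  intros Hq. destruct (is_poly_fun_derive q Hq) as [q' [Hq' Dq]].
  exists (fun y => y * y * (q y + (-1) * q' y)). split; [repeat constructor; assumption |].
  intros x. destruct (Rtotal_order x 0) as [Hx | [-> | Hx]].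
  - apply (is_derive_ext_loc (fun _ => 0)).
    + apply (locally_interval _ x m_infty 0); simpl; [exact I | exact Hx |].
      intros y _ Hy. unfold flat. destruct (Rlt_dec 0 y); [lra | reflexivity].
    + unfold flat. destruct (Rlt_dec 0 x); [lra |]. apply is_derive_Rconst.
  - apply is_derive_Reals. intros eps Heps.
    destruct (poly_exp_inv_lim q Hq eps Heps) as [d [Hd Hd2]].
    exists (mkposreal d Hd). intros h Hh0 Hh. simpl in Hh.
    unfold flat. rewrite Rplus_0_l. destruct (Rlt_dec 0 0); [lra |].
    destruct (Rlt_dec 0 h).
    + replace ((q (/ h) * exp (- / h) - 0) / h - 0) with (q (/ h) * exp (- / h) / h) by (field; lra).
      apply Hd2. rewrite Rabs_right in Hh; lra.
    + replace ((0 - 0) / h - 0) with 0 by (field; exact Hh0). rewrite Rabs_R0. lra.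
  - apply (is_derive_ext_loc (fun x => q (/ x) * exp (- / x))).
    + apply (locally_interval _ x 0 p_infty); simpl; [exact Hx | exact I |].
      intros y Hy _. unfold flat. destruct (Rlt_dec 0 y); [reflexivity | lra].
    + unfold flat. destruct (Rlt_dec 0 x); [| lra].
      assert (Hinv := is_derive_Rinv x ltac:(lra)).
      assert (H1 := is_derive_Rcomp q (fun y => / y) x _ _ (Dq (/ x)) Hinv).
      assert (Hu : is_derive (fun y => - / y) x (/ (x * x))) by (auto_derive; [lra | field; lra]).
      assert (H2 := is_derive_Rcomp exp (fun y => - / y) x _ _ (is_derive_exp (- / x)) Hu).
      eapply is_derive_Rext; [intros y; reflexivity | | exact (is_derive_Rmult _ _ x _ _ H1 H2)].
      cbv beta. field. lra.
Qed.

Lemma smooth1_flat q : is_poly_fun q -> smooth1 (flat q).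
Proof.
  intros Hq. apply smooth1_derivable_upto. intros n. revert q Hq.
  induction n as [|n IH]; intros q Hq; destruct (flat_is_derive q Hq) as [r [Hr Hd]].
  - apply derivable_upto_0. intros x. exists (flat r x). apply Hd.
  - apply derivable_upto_S. split.
    + intros x. exists (flat r x). apply Hd.
    + apply derivable_upto_ext with (flat r); [| now apply IH].
      intros x. symmetry. apply is_derive_unique, Hd.
Qed.

Definition flat_step : R -> R := flat (fun _ => 1).

Lemma smooth1_flat_step : smooth1 flat_step.
Proof. apply smooth1_flat. constructor. Qed.

Lemma flat_step_nonpos x : x <= 0 -> flat_step x = 0.
Proof. intros H. unfold flat_step, flat. destruct (Rlt_dec 0 x); [lra | reflexivity]. Qed.

Lemma flat_step_pos x : 0 < x -> 0 < flat_step x.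
Proof.
  intros H. unfold flat_step, flat. destruct (Rlt_dec 0 x); [| lra].
  rewrite Rmult_1_l. apply exp_pos.
Qed.

Lemma flat_step_ge0 x : 0 <= flat_step x.
Proof.
  destruct (Rle_dec x 0); [rewrite flat_step_nonpos by assumption; lra |].
  apply Rlt_le, flat_step_pos. lra.
Qed.

Definition cutoff (u : R) : R := flat_step (2 - u) / (flat_step (2 - u) + flat_step (u - 1)).

Lemma cutoff_denom_pos u : 0 < flat_step (2 - u) + flat_step (u - 1).
Proof.
  pose proof (flat_step_ge0 (2 - u)). pose proof (flat_step_ge0 (u - 1)).
  destruct (Rlt_dec u 2).
  - pose proof (flat_step_pos (2 - u) ltac:(lra)). lra.
  - pose proof (flat_step_pos (u - 1) ltac:(lra)). lra.
Qed.

Lemma smooth1_cutoff : smooth1 cutoff.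
Proof.
  assert (H1 : smooth1 (fun u => flat_step (2 - u))).
  { apply smooth1_ext with (fun u => flat_step ((-1) * u + 2)); [intros; f_equal; ring |].
    apply smooth1_comp_affine, smooth1_flat_step. }
  assert (H2 : smooth1 (fun u => flat_step (u - 1))).
  { apply smooth1_ext with (fun u => flat_step (1 * u + (-1))); [intros; f_equal; ring |].
    apply smooth1_comp_affine, smooth1_flat_step. }
  apply smooth1_mult; [exact H1 |]. apply smooth1_inv; [now apply smooth1_plus |].
  intros u. pose proof (cutoff_denom_pos u). lra.
Qed.

Lemma cutoff_le1 u : u <= 1 -> cutoff u = 1.
Proof.
  intros H. unfold cutoff. rewrite (flat_step_nonpos (u - 1)) by lra.
  pose proof (flat_step_pos (2 - u) ltac:(lra)). field. lra.
Qed.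

Lemma cutoff_ge2 u : 2 <= u -> cutoff u = 0.
Proof. intros H. unfold cutoff. rewrite (flat_step_nonpos (2 - u)) by lra. unfold Rdiv. ring. Qed.

Definition bump (u : R) : R := cutoff u * cutoff (- u).

Lemma smooth1_bump : smooth1 bump.
Proof.
  apply smooth1_mult; [apply smooth1_cutoff |].
  apply smooth1_ext with (fun u => cutoff ((-1) * u + 0)); [intros; f_equal; ring |].
  apply smooth1_comp_affine, smooth1_cutoff.
Qed.

Lemma bump_near0 u : Rabs u <= 1 -> bump u = 1.
Proof.
  intros H. apply Rabs_le_between in H. unfold bump. rewrite !cutoff_le1 by lra. ring.
Qed.

Lemma bump_far u : 2 <= Rabs u -> bump u = 0.
Proof.
  intros H. unfold bump. destruct (Rle_dec 0 u).
  - rewrite Rabs_right in H by lra. rewrite cutoff_ge2 by lra. ring.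
  - rewrite Rabs_left in H by lra. rewrite (cutoff_ge2 (- u)) by lra. ring.
Qed.

(** * Borel's lemma *)

Lemma smooth1_bounded_on f a b : a <= b -> smooth1 f ->
  exists M, 0 <= M /\ forall u, a <= u <= b -> Rabs (f u) <= M.
Proof.
  intros Hab Hf.
  destruct (continuity_ab_maj (fun u => Rabs (f u)) a b Hab) as [m [Hm _]].
  { intros u _. apply (continuity_pt_comp f Rabs); [now apply smooth1_continuity_pt |].
    apply Rcontinuity_abs. }
  exists (Rabs (f m)). split; [apply Rabs_pos | exact Hm].
Qed.

Definition bump_monomial (n : nat) (u : R) : R := u ^ n * bump u / INR (fact n).

Lemma smooth1_bump_monomial n : smooth1 (bump_monomial n).
Proof.
  apply smooth1_ext with (fun u => / INR (fact n) * (u ^ n * bump u)); [intros; unfold bump_monomial, Rdiv; ring |].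
  apply smooth1_scal, smooth1_mult; [apply smooth1_pow | apply smooth1_bump].
Qed.

Lemma Derive_n_bump_monomial_far n k u : 2 < Rabs u -> Derive_n (bump_monomial n) k u = 0.
Proof.
  intros Hu.
  assert (Hfar : forall y, 2 < Rabs y -> bump_monomial n y = 0).
  { intros y Hy. unfold bump_monomial. rewrite bump_far by lra. unfold Rdiv. ring. }
  destruct k as [|k]; [now apply Hfar |].
  transitivity (Derive_n (fun _ => 0) (S k) u); [| apply Derive_n_const].
  apply Derive_n_ext_loc. destruct (Rle_dec 0 u).
  - rewrite Rabs_right in Hu by lra.
    apply (locally_interval _ u 2 p_infty); simpl; [lra | exact I |].
    intros y Hy _. apply Hfar. rewrite Rabs_right; lra.
  - rewrite Rabs_left in Hu by lra.
    apply (locally_interval _ u m_infty (-2)); simpl; [exact I | lra |].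
    intros y _ Hy. apply Hfar. rewrite Rabs_left; lra.
Qed.

Lemma Derive_n_bump_monomial_bounded n :
  exists M, 0 <= M /\ forall k, (k <= n)%nat -> forall u, Rabs (Derive_n (bump_monomial n) k u) <= M.
Proof.
  assert (Hk : forall k, exists M, 0 <= M /\ forall u, Rabs (Derive_n (bump_monomial n) k u) <= M).
  { intros k.
    destruct (smooth1_bounded_on (Derive_n (bump_monomial n) k) (-2) 2 ltac:(lra)
               (smooth1_Derive_n _ k (smooth1_bump_monomial n))) as [M [HM0 HM]].
    exists M. split; [exact HM0 |]. intros u.
    destruct (Rle_dec (Rabs u) 2) as [Hu | Hu].
    - apply HM, Rabs_le_between, Hu.
    - rewrite Derive_n_bump_monomial_far, Rabs_R0 by lra. exact HM0. }
  assert (Hj : forall j, exists M, 0 <= M /\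
    forall k, (k <= j)%nat -> forall u, Rabs (Derive_n (bump_monomial n) k u) <= M).
  { induction j as [|j [M1 [HM1 H1]]].
    - destruct (Hk 0%nat) as [M [HM H]]. exists M. split; [exact HM |].
      intros k Hk0 u. replace k with 0%nat by lia. apply H.
    - destruct (Hk (S j)) as [M2 [HM2 H2]]. exists (Rmax M1 M2).
      split; [eapply Rle_trans; [exact HM1 | apply Rmax_l] |].
      intros k Hkj u. destruct (Nat.eq_dec k (S j)) as [-> | Hne].
      + eapply Rle_trans; [apply H2 | apply Rmax_r].
      + eapply Rle_trans; [apply H1; lia | apply Rmax_l]. }
  apply Hj.
Qed.

Definition borel_bound (M : nat -> R) (n : nat) : Prop :=
  0 <= M n /\ forall k, (k <= n)%nat -> forall u, Rabs (Derive_n (bump_monomial n) k u) <= M n.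

Lemma borel_bound_exists : exists M, forall n, borel_bound M n.
Proof. apply functional_choice with (R := fun n m => borel_bound (fun _ => m) n), Derive_n_bump_monomial_bounded. Qed.

Lemma pow_div_pow_le_inv l k n : 1 <= l -> (k < n)%nat -> l ^ k / l ^ n <= / l.
Proof.
  intros Hl Hkn.
  assert (Hlk : 0 < l ^ k) by (apply pow_lt; lra).
  assert (Hrest : 1 <= l ^ (n - S k)) by (apply pow_R1_Rle; lra).
  assert (E : l ^ n = l ^ k * (l * l ^ (n - S k))).
  { change (l * l ^ (n - S k)) with (l ^ S (n - S k)). rewrite <- pow_add. f_equal. lia. }
  rewrite E. replace (l ^ k / (l ^ k * (l * l ^ (n - S k)))) with (/ (l * l ^ (n - S k))) by (field; lra).
  apply Rinv_le_contravar; nra.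
Qed.

Section Borel.

Variables (c M : nat -> R).
Hypothesis HM : forall n, borel_bound M n.

(* The [n]-th term [c n x^n / n!] of the Taylor series, cut off at scale [1 / borel_scale n]
   so that its derivatives of order [< n] are at most [2^-n]. *)
Definition borel_scale (n : nat) : R := 1 + 2 ^ n * Rabs (c n) * M n.

Definition borel_term (n : nat) (s : R) : R :=
  c n / borel_scale n ^ n * bump_monomial n (borel_scale n * s).

Lemma borel_scale_ge1 n : 1 <= borel_scale n.
Proof.
  destruct (HM n) as [HM0 _]. unfold borel_scale.
  pose proof (pow_le 2 n ltac:(lra)). pose proof (Rabs_pos (c n)).
  assert (0 <= 2 ^ n * Rabs (c n) * M n) by (apply Rmult_le_pos; [apply Rmult_le_pos |]; assumption).
  lra.
Qed.

Lemma smooth1_borel_term n : smooth1 (borel_term n).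
Proof.
  unfold borel_term. apply smooth1_scal.
  apply smooth1_ext with (fun s => bump_monomial n (borel_scale n * s + 0)); [intros; f_equal; ring |].
  apply smooth1_comp_affine, smooth1_bump_monomial.
Qed.

Lemma Derive_n_borel_term n k s : Derive_n (borel_term n) k s =
  c n / borel_scale n ^ n * (borel_scale n ^ k * Derive_n (bump_monomial n) k (borel_scale n * s)).
Proof.
  unfold borel_term. rewrite Derive_n_scal_l. f_equal.
  apply Derive_n_comp_scal, filter_forall. intros y [|j] _; [exact I | apply (smooth1_bump_monomial n)].
Qed.

Lemma Derive_n_borel_term_small n k s : (k < n)%nat ->
  Rabs (Derive_n (borel_term n) k s) <= (/ 2) ^ n.
Proof.
  intros Hk. rewrite Derive_n_borel_term.
  pose proof (borel_scale_ge1 n) as Hl. destruct (HM n) as [HM0 HD].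
  set (l := borel_scale n) in *. set (D := Derive_n (bump_monomial n) k (l * s)).
  assert (HDle : Rabs D <= M n) by (apply HD; lia).
  assert (Hlk : 0 < l ^ k) by (apply pow_lt; lra).
  assert (Hln : 0 < l ^ n) by (apply pow_lt; lra).
  pose proof (pow_div_pow_le_inv l k n Hl Hk) as Hq.
  pose proof (Rabs_pos (c n)).
  replace (Rabs (c n / l ^ n * (l ^ k * D))) with (Rabs (c n) * (l ^ k / l ^ n) * Rabs D)
    by (rewrite !Rabs_mult; unfold Rdiv; rewrite Rabs_mult, Rabs_inv,
          (Rabs_right (l ^ n)), (Rabs_right (l ^ k)) by lra; ring).
  assert (Hq0 : 0 <= l ^ k / l ^ n) by (apply Rlt_le, Rdiv_lt_0_compat; assumption).
  apply Rle_trans with (Rabs (c n) * / l * M n).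
  { apply Rmult_le_compat; [apply Rmult_le_pos; assumption | apply Rabs_pos | | exact HDle].
    now apply Rmult_le_compat_l. }
  assert (H2n : 0 < 2 ^ n) by (apply pow_lt; lra).
  assert (HA : 0 <= 2 ^ n * Rabs (c n) * M n) by (apply Rmult_le_pos; [apply Rmult_le_pos |]; lra).
  rewrite pow_inv.
  unfold l, borel_scale. apply (Rmult_le_reg_r (2 ^ n * (1 + 2 ^ n * Rabs (c n) * M n))); [nra |].
  replace (Rabs (c n) * / (1 + 2 ^ n * Rabs (c n) * M n) * M n * (2 ^ n * (1 + 2 ^ n * Rabs (c n) * M n)))
    with (2 ^ n * Rabs (c n) * M n) by (field; lra).
  replace (/ 2 ^ n * (2 ^ n * (1 + 2 ^ n * Rabs (c n) * M n))) with (1 + 2 ^ n * Rabs (c n) * M n)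
    by (field; lra).
  lra.
Qed.

Lemma Derive_n_borel_term_0 n k :
  Derive_n (borel_term n) k 0 = if Nat.eq_dec k n then c n else 0.
Proof.
  pose proof (borel_scale_ge1 n) as Hl. set (l := borel_scale n) in *.
  assert (Hil : 0 < / l) by (apply Rinv_0_lt_compat; lra).
  rewrite (Derive_n_ext_loc _ (fun s => c n / INR (fact n) * s ^ n)).
  - rewrite Derive_n_scal_l, Derive_n_pow.
    destruct (Compare_dec.le_dec k n); destruct (Nat.eq_dec k n) as [-> |]; try lia.
    + rewrite Nat.sub_diag. simpl. field. apply INR_fact_neq_0.
    + rewrite pow_i by lia. ring.
    + ring.
  - apply (locally_interval _ 0 (- / l) (/ l)); simpl; [lra | lra |].
    intros y Hy1 Hy2. unfold borel_term, bump_monomial. fold l.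
    rewrite bump_near0.
    + rewrite Rpow_mult_distr. field. split; [apply INR_fact_neq_0 | apply pow_nonzero; lra].
    + apply Rabs_le_between.
      split; apply (Rmult_le_reg_r (/ l)); try exact Hil;
        replace (l * y * / l) with y by (field; lra); lra.
Qed.

Definition borel_Derive_n (k : nat) (s : R) : R := Series (fun n => Derive_n (borel_term n) k s).

Lemma ex_series_half_pow_shift N : ex_series (fun j => (/ 2) ^ (N + j)).
Proof. apply (ex_series_incr_n (fun n => (/ 2) ^ n)), ex_series_geom. rewrite Rabs_right; lra. Qed.

Lemma ex_series_borel_tail k s N : (k < N)%nat ->
  ex_series (fun j => Rabs (Derive_n (borel_term (N + j)) k s)).
Proof.
  intros HN. apply (ex_series_le (K := R_AbsRing) (V := R_CompleteNormedModule) _ (fun j => (/ 2) ^ (N + j))).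
  - intros j. change norm with Rabs. rewrite Rabs_Rabsolu. apply Derive_n_borel_term_small. lia.
  - apply ex_series_half_pow_shift.
Qed.

Lemma ex_series_borel k s : ex_series (fun n => Derive_n (borel_term n) k s).
Proof. apply (ex_series_incr_n _ (S k)), ex_series_Rabs, ex_series_borel_tail. lia. Qed.

Lemma borel_Derive_n_tail k s N : (k <= N)%nat ->
  Rabs (borel_Derive_n k s - sum_f_R0 (fun n => Derive_n (borel_term n) k s) N) <= (/ 2) ^ N.
Proof.
  intros HN. unfold borel_Derive_n.
  rewrite (Series_incr_n _ (S N)) by (lia || apply ex_series_borel).
  simpl Init.Nat.pred.
  match goal with |- Rabs (?S + ?T - ?S) <= _ => replace (S + T - S) with T by ring end.
  eapply Rle_trans; [apply Series_Rabs, ex_series_borel_tail; lia |].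
  eapply Rle_trans.
  - apply (Series_le _ (fun j => (/ 2) ^ (S N + j))); [| apply ex_series_half_pow_shift].
    intros j. split; [apply Rabs_pos | apply Derive_n_borel_term_small; lia].
  - rewrite (Series_ext _ (fun j => (/ 2) ^ S N * (/ 2) ^ j)) by (intros; apply pow_add).
    rewrite Series_scal_l, Series_geom by (rewrite Rabs_right; lra).
    simpl. lra.
Qed.

Lemma borel_Derive_n_CVU k x r :
  CVU (fun N y => sum_f_R0 (fun n => Derive_n (borel_term n) k y) N) (borel_Derive_n k) x r.
Proof.
  intros eps Heps.
  destruct (pow_lt_1_zero (/ 2) ltac:(rewrite Rabs_right; lra) eps Heps) as [N HN].
  exists (N + k)%nat. intros n y Hn _.
  eapply Rle_lt_trans; [apply borel_Derive_n_tail; lia |].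
  specialize (HN n ltac:(lia)). rewrite Rabs_right in HN; [exact HN |].
  apply Rle_ge, pow_le. lra.
Qed.

Lemma is_derive_borel_Derive_n k s : is_derive (borel_Derive_n k) s (borel_Derive_n (S k) s).
Proof.
  apply is_derive_Reals.
  apply (CVU_derivable (fun N y => sum_f_R0 (fun n => Derive_n (borel_term n) k y) N)
                       (fun N y => sum_f_R0 (fun n => Derive_n (borel_term n) (S k) y) N)
                       _ _ s (mkposreal 1 Rlt_0_1)).
  - apply borel_Derive_n_CVU.
  - intros y _. apply is_series_Reals, Series_correct, ex_series_borel.
  - intros N y _. induction N as [|N IH]; simpl.
    + apply is_derive_Reals, Derive_correct, smooth1_borel_term.
    + apply (derivable_pt_lim_plus _ (Derive_n (borel_term (S N)) k)); [exact IH |].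
      apply is_derive_Reals, Derive_correct, smooth1_borel_term.
  - unfold Boule. simpl. rewrite Rminus_eq_0, Rabs_R0. lra.
Qed.

End Borel.

Lemma Series_single (a : nat -> R) k : Series (fun n => if Nat.eq_dec k n then a n else 0) = a k.
Proof.
  rewrite (Series_incr_n _ (S k)); [| lia |].
  - simpl Init.Nat.pred.
    rewrite (Series_ext _ (fun _ => 0 * 0)) by (intros n; destruct (Nat.eq_dec k (S k + n)); [lia | now rewrite Rmult_0_l]).
    rewrite Series_scal_l, Rmult_0_l, Rplus_0_r.
    induction k as [|k _]; [simpl; now destruct (Nat.eq_dec 0 0) |].
    rewrite tech5. destruct (Nat.eq_dec (S k) (S k)) as [_ | ]; [| lia].
    rewrite sum_eq_R0; [ring |].
    intros m Hm. destruct (Nat.eq_dec (S k) m); [lia | reflexivity].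
  - apply (ex_series_incr_n _ (S k)).
    apply ex_series_ext with (fun n => 0 * (/ 2) ^ n);
      [intros n; destruct (Nat.eq_dec k (S k + n)); [lia | now rewrite Rmult_0_l] |].
    apply (ex_series_scal_l (K := R_AbsRing) (V := R_NormedModule)), ex_series_geom.
    rewrite Rabs_right; lra.
Qed.

Theorem borel (c : nat -> R) : exists B, smooth1 B /\ forall k, Derive_n B k 0 = c k.
Proof.
  destruct borel_bound_exists as [M HM].
  destruct (smooth1_of_is_derive (borel_Derive_n c M) (is_derive_borel_Derive_n c M HM)) as [HS HD].
  exists (borel_Derive_n c M 0). split; [exact HS |].
  intros k. rewrite HD. unfold borel_Derive_n.
  rewrite (Series_ext _ (fun n => if Nat.eq_dec k n then c n else 0))
    by (intros n; apply Derive_n_borel_term_0, HM).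
  apply Series_single.
Qed.

(** * Odd smooth functions are [x G (x^2)] *)

Lemma ex_RInt_Rcontinuous (f : R -> R) a b :
  (forall z, Rmin a b <= z <= Rmax a b -> continuous f z) -> ex_RInt f a b.
Proof. exact (ex_RInt_continuous (V := R_CompleteNormedModule) f a b). Qed.

(* [hadamard u n x = int_0^1 t^n u^(n+1)(t x) dt], the [n]-th derivative of [(u x - u 0) / x]. *)
Definition hadamard (u : R -> R) (n : nat) (x : R) : R :=
  RInt (fun t => t ^ n * Derive_n u (S n) (t * x)) 0 1.

Section Hadamard.

Variable u : R -> R.
Hypothesis Hu : smooth1 u.

Lemma is_derive_hadamard_integrand n t z :
  is_derive (fun z => t ^ n * Derive_n u (S n) (t * z)) z (t ^ S n * Derive_n u (S (S n)) (t * z)).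
Proof.
  assert (H1 : is_derive (Derive_n u (S n)) (t * z) (Derive_n u (S (S n)) (t * z)))
    by (apply Derive_correct, (Hu (S n))).
  assert (H2 : is_derive (fun z => t * z) z t) by (auto_derive; [exact I | ring]).
  eapply is_derive_Rext; [intros; reflexivity | |
    exact (is_derive_scal _ z (t ^ n) _ (is_derive_Rcomp _ _ z _ _ H1 H2))].
  simpl. ring.
Qed.

Lemma continuous_hadamard_integrand n y z :
  continuous (fun t => t ^ n * Derive_n u (S n) (t * y)) z.
Proof.
  apply ex_derive_Rcontinuous, ex_derive_mult.
  - apply ex_derive_pow, ex_derive_id.
  - apply (ex_derive_comp (Derive_n u (S n)) (fun t => t * y)).
    + apply (Hu (S n)).
    + exists y. auto_derive; [exact I | ring].
Qed.

Lemma is_derive_hadamard n x : is_derive (hadamard u n) x (hadamard u (S n) x).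
Proof.
  unfold hadamard.
  assert (HD : forall t z, Derive (fun z => t ^ n * Derive_n u (S n) (t * z)) z =
                           t ^ S n * Derive_n u (S (S n)) (t * z))
    by (intros; apply is_derive_unique, is_derive_hadamard_integrand).
  rewrite (RInt_ext _ (fun t => Derive (fun z => t ^ n * Derive_n u (S n) (t * z)) x))
    by (intros; symmetry; apply HD).
  apply (is_derive_RInt_param (fun z t => t ^ n * Derive_n u (S n) (t * z)) 0 1 x).
  - apply filter_forall. intros z t _. exists (t ^ S n * Derive_n u (S (S n)) (t * z)).
    apply is_derive_hadamard_integrand.
  - intros t _. apply (continuity_2d_pt_ext (fun z v => v ^ S n * Derive_n u (S (S n)) (v * z)));
      [intros; symmetry; apply HD |].
    apply continuity_2d_pt_mult.
    + apply (continuity_1d_2d_pt_comp (fun v => v ^ S n) (fun _ v => v)).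
      * apply derivable_continuous_pt, derivable_pt_pow.
      * apply continuity_2d_pt_id2.
    + apply (continuity_1d_2d_pt_comp (Derive_n u (S (S n))) (fun z v => v * z)).
      * apply smooth1_continuity_pt, smooth1_Derive_n, Hu.
      * apply continuity_2d_pt_mult; [apply continuity_2d_pt_id2 | apply continuity_2d_pt_id1].
  - apply filter_forall. intros y. apply ex_RInt_Rcontinuous. intros z _.
    apply continuous_hadamard_integrand.
Qed.

Lemma smooth1_hadamard : smooth1 (hadamard u 0).
Proof. exact (proj1 (smooth1_of_is_derive (hadamard u) is_derive_hadamard)). Qed.

Lemma hadamard_spec x : x * hadamard u 0 x = u x - u 0.
Proof.
  assert (HD : forall t, is_derive (fun t => u (t * x)) t (x * Derive u (t * x))).
  { intros t. apply (is_derive_Rcomp u (fun t => t * x) t);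
      [apply Derive_correct, smooth1_ex_derive, Hu | auto_derive; [exact I | ring]]. }
  pose proof (RInt_Derive (fun t => u (t * x)) 0 1) as H.
  cbv beta in H. rewrite Rmult_1_l, Rmult_0_l in H. rewrite <- H.
  - rewrite (RInt_ext _ (fun t => x * (t ^ 0 * Derive_n u 1 (t * x)))).
    + unfold hadamard. symmetry. apply (RInt_scal (V := R_CompleteNormedModule)).
      apply ex_RInt_Rcontinuous. intros z _. apply continuous_hadamard_integrand.
    + intros t _. simpl. rewrite Rmult_1_l. apply is_derive_unique, HD.
  - intros t _. exists (x * Derive u (t * x)). apply HD.
  - intros t _. apply (continuous_ext (fun t => x * Derive u (t * x))).
    + intros z. symmetry. apply is_derive_unique, HD.
    + apply ex_derive_Rcontinuous, ex_derive_scal.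
      apply (ex_derive_comp (Derive u) (fun t => t * x)).
      * apply (smooth1_Derive u Hu 0%nat).
      * exists x. auto_derive; [exact I | ring].
Qed.

End Hadamard.

Definition even_fun (f : R -> R) : Prop := forall x, f (- x) = f x.

Lemma Derive_even_fun f x : even_fun f -> smooth1 f -> Derive f (- x) = - Derive f x.
Proof.
  intros He Hs.
  assert (E : Derive (fun y => f ((-1) * y + 0)) x = -1 * Derive f ((-1) * x + 0))
    by (apply Derive_comp_affine, smooth1_ex_derive, Hs).
  rewrite (Derive_ext (fun y => f ((-1) * y + 0)) f) in E by (intros; rewrite <- He; f_equal; ring).
  replace ((-1) * x + 0) with (- x) in E by ring. lra.
Qed.

Lemma Derive_even_fun_0 f : even_fun f -> smooth1 f -> Derive f 0 = 0.
Proof. intros He Hs. pose proof (Derive_even_fun f 0 He Hs). rewrite Ropp_0 in H. lra. Qed.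

(* The smooth extension of [F'(x) / (2 x)]: for even [F], [F (sqrt s)] has derivative
   [deriv_div_2x F (sqrt s)] on [s > 0]. *)
Definition deriv_div_2x (F : R -> R) (x : R) : R := / 2 * hadamard (Derive F) 0 x.

Lemma smooth1_deriv_div_2x F : smooth1 F -> smooth1 (deriv_div_2x F).
Proof. intros H. now apply smooth1_scal, smooth1_hadamard, smooth1_Derive. Qed.

Lemma deriv_div_2x_spec F x : smooth1 F -> even_fun F -> 2 * x * deriv_div_2x F x = Derive F x.
Proof.
  intros Hs He. unfold deriv_div_2x.
  replace (2 * x * (/ 2 * hadamard (Derive F) 0 x)) with (x * hadamard (Derive F) 0 x) by field.
  rewrite hadamard_spec by (now apply smooth1_Derive).
  rewrite Derive_even_fun_0 by assumption. ring.
Qed.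

Lemma even_deriv_div_2x F : smooth1 F -> even_fun F -> even_fun (deriv_div_2x F).
Proof.
  intros Hs He x. destruct (Req_dec x 0) as [-> | Hx]; [now rewrite Ropp_0 |].
  pose proof (deriv_div_2x_spec F x Hs He). pose proof (deriv_div_2x_spec F (- x) Hs He).
  rewrite Derive_even_fun in H0 by assumption.
  apply (Rmult_eq_reg_l (2 * x)); lra.
Qed.

Lemma is_derive_comp_sqrt F s : smooth1 F -> even_fun F -> 0 < s ->
  is_derive (fun s => F (sqrt s)) s (deriv_div_2x F (sqrt s)).
Proof.
  intros Hs He Hpos.
  assert (Hq : 0 < sqrt s) by (now apply sqrt_lt_R0).
  assert (H1 : is_derive sqrt s (/ (2 * sqrt s))) by (now apply is_derive_Reals, derivable_pt_lim_sqrt).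
  eapply is_derive_Rext; [intros; reflexivity | |
    exact (is_derive_Rcomp F sqrt s _ _ (Derive_correct _ _ (smooth1_ex_derive F (sqrt s) Hs)) H1)].
  rewrite <- (deriv_div_2x_spec F (sqrt s) Hs He). field. lra.
Qed.

Fixpoint iter_deriv_div_2x (F : R -> R) (n : nat) : R -> R :=
  match n with O => F | S n => deriv_div_2x (iter_deriv_div_2x F n) end.

Lemma iter_deriv_div_2x_smooth_even F n : smooth1 F -> even_fun F ->
  smooth1 (iter_deriv_div_2x F n) /\ even_fun (iter_deriv_div_2x F n).
Proof.
  intros Hs He. induction n as [|n [IH1 IH2]]; [easy |]. simpl. split.
  - now apply smooth1_deriv_div_2x.
  - now apply even_deriv_div_2x.
Qed.

Lemma is_derive_glue_0 (f g df : R -> R) :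
  (forall s, 0 < s -> is_derive f s (df s)) ->
  (forall s, 0 <= s -> continuity_pt f s) ->
  continuity_pt df 0 ->
  is_derive g 0 (df 0) -> f 0 = g 0 ->
  is_derive (fun s => if Rle_dec 0 s then f s else g s) 0 (df 0).
Proof.
  intros Hf Hfc Hdf Hg Hfg.
  apply is_derive_Reals. intros eps Heps.
  destruct (proj1 (is_derive_Reals g 0 (df 0)) Hg eps Heps) as [d1 Hd1].
  destruct (Hdf eps Heps) as [d2 [Hd2 Hd2']].
  assert (Hd : 0 < Rmin d1 d2) by (apply Rmin_pos; [apply cond_pos | exact Hd2]).
  exists (mkposreal _ Hd). intros h Hh0 Hh. simpl in Hh.
  pose proof (Rmin_l d1 d2). pose proof (Rmin_r d1 d2).
  rewrite Rplus_0_l. destruct (Rle_dec 0 0) as [_ | ]; [| lra].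
  destruct (Rle_dec 0 h) as [Hpos | Hneg].
  - destruct (MVT_gen f 0 h df) as [xi [Hxi Hmvt]].
    + rewrite Rmin_left, Rmax_right by lra. intros t Ht. apply Hf. lra.
    + rewrite Rmin_left, Rmax_right by lra. intros t Ht. apply Hfc. lra.
    + rewrite Rmin_left, Rmax_right in Hxi by lra. rewrite Hmvt.
      replace (df xi * (h - 0) / h - df 0) with (df xi - df 0) by (field; lra).
      destruct (Req_dec xi 0) as [-> | Hne]; [rewrite Rminus_eq_0, Rabs_R0; lra |].
      apply Hd2'. split; [split; [exact I | auto] |].
      simpl. unfold R_dist. rewrite Rminus_0_r, Rabs_right by lra. rewrite Rabs_right in Hh; lra.
  - specialize (Hd1 h Hh0 ltac:(lra)). rewrite Rplus_0_l in Hd1. now rewrite Hfg.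
Qed.

Section SqrtGlue.

Variables F B : R -> R.
Hypotheses (HF : smooth1 F) (HFe : even_fun F) (HB : smooth1 B).
Hypothesis HB0 : forall k, Derive_n B k 0 = iter_deriv_div_2x F k 0.

(* [F (sqrt s)] on [s >= 0], continued by a function [B] with the right derivatives at [0]. *)
Definition sqrt_glue (n : nat) (s : R) : R :=
  if Rle_dec 0 s then iter_deriv_div_2x F n (sqrt s) else Derive_n B n s.

Lemma is_derive_sqrt_glue n s : is_derive (sqrt_glue n) s (sqrt_glue (S n) s).
Proof.
  destruct (iter_deriv_div_2x_smooth_even F n HF HFe) as [Hn Hne].
  destruct (iter_deriv_div_2x_smooth_even F (S n) HF HFe) as [HSn _].
  destruct (Rtotal_order s 0) as [Hs | [-> | Hs]].
  - apply (is_derive_ext_loc (Derive_n B n)).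
    + apply (locally_interval _ s m_infty 0); simpl; [exact I | exact Hs |].
      intros y _ Hy. unfold sqrt_glue. destruct (Rle_dec 0 y); [lra | reflexivity].
    + unfold sqrt_glue. destruct (Rle_dec 0 s); [lra |].
      apply Derive_correct, HB.
  - unfold sqrt_glue at 2. destruct (Rle_dec 0 0) as [_ |]; [| lra].
    apply (is_derive_glue_0 (fun s => iter_deriv_div_2x F n (sqrt s)) (Derive_n B n)
                            (fun s => iter_deriv_div_2x F (S n) (sqrt s))).
    + intros s Hs. now apply is_derive_comp_sqrt.
    + intros s Hs. apply (continuity_pt_comp sqrt); [now apply continuity_pt_sqrt |].
      now apply smooth1_continuity_pt.
    + apply (continuity_pt_comp sqrt); [apply continuity_pt_sqrt; lra |].
      now apply smooth1_continuity_pt.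
    + rewrite sqrt_0, <- HB0. apply Derive_correct, HB.
    + now rewrite sqrt_0, HB0.
  - apply (is_derive_ext_loc (fun s => iter_deriv_div_2x F n (sqrt s))).
    + apply (locally_interval _ s 0 p_infty); simpl; [exact Hs | exact I |].
      intros y Hy _. unfold sqrt_glue. destruct (Rle_dec 0 y); [reflexivity | lra].
    + unfold sqrt_glue. destruct (Rle_dec 0 s); [| lra].
      now apply is_derive_comp_sqrt.
Qed.

Lemma sqrt_glue_spec : smooth1 (sqrt_glue 0) /\ forall s, 0 <= s -> sqrt_glue 0 s = F (sqrt s).
Proof.
  split; [exact (proj1 (smooth1_of_is_derive sqrt_glue is_derive_sqrt_glue)) |].
  intros s Hs. unfold sqrt_glue. destruct (Rle_dec 0 s); [reflexivity | lra].
Qed.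

End SqrtGlue.

(* Whitney: [h x / x] is a smooth even function [F], and [F (sqrt s)] extends smoothly to
   [s < 0] because Borel's lemma supplies a function with its one-sided derivatives at [0]. *)
Theorem odd_smooth_decomposition h : smooth1 h -> (forall x, h (- x) = - h x) ->
  exists G, smooth1 G /\ forall x, h x = x * G (x ^ 2).
Proof.
  intros Hh Hodd.
  assert (H0 : h 0 = 0) by (pose proof (Hodd 0) as E; rewrite Ropp_0 in E; lra).
  set (F := hadamard h 0).
  assert (HF : smooth1 F) by now apply smooth1_hadamard.
  assert (HId : forall x, x * F x = h x) by (intros x; unfold F; rewrite hadamard_spec, H0 by easy; ring).
  assert (HFe : even_fun F).
  { intros x. destruct (Req_dec x 0) as [-> | Hx]; [now rewrite Ropp_0 |].
    apply (Rmult_eq_reg_l x); [| exact Hx].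
    pose proof (HId x). pose proof (HId (- x)). rewrite Hodd in H1. lra. }
  destruct (borel (fun n => iter_deriv_div_2x F n 0)) as [B [HB HB0]].
  destruct (sqrt_glue_spec F B HF HFe HB HB0) as [HG1 HG2].
  exists (sqrt_glue F B 0). split; [exact HG1 |].
  intros x. rewrite HG2 by apply pow2_ge_0.
  replace (x ^ 2) with (Rsqr x) by (unfold Rsqr; ring).
  rewrite sqrt_Rsqr_abs, <- HId. f_equal.
  destruct (Rle_dec 0 x); [now rewrite Rabs_right by lra |].
  rewrite Rabs_left by lra. now rewrite HFe.
Qed.

(** * One-parameter groups of isometries of the plane *)

Definition additive (f : R -> R) : Prop := forall s t, f (s + t) = f s + f t.

Section Additive.

Variable f : R -> R.
Hypothesis Hf : additive f.

Lemma additive_0 : f 0 = 0.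
Proof. pose proof (Hf 0 0) as H. rewrite Rplus_0_l in H. lra. Qed.

Lemma additive_opp x : f (- x) = - f x.
Proof. pose proof (Hf x (- x)) as H. rewrite Rplus_opp_r, additive_0 in H. lra. Qed.

Lemma additive_INR n x : f (INR n * x) = INR n * f x.
Proof.
  induction n as [|n IH].
  - simpl. rewrite !Rmult_0_l. exact additive_0.
  - rewrite S_INR, Rmult_plus_distr_r, Rmult_1_l, Hf, IH. ring.
Qed.

Lemma additive_IZR z x : f (IZR z * x) = IZR z * f x.
Proof.
  destruct z as [| p | p].
  - rewrite !Rmult_0_l. exact additive_0.
  - rewrite <- positive_nat_Z, <- INR_IZR_INZ. apply additive_INR.
  - rewrite <- Pos2Z.opp_pos, opp_IZR, <- positive_nat_Z, <- INR_IZR_INZ.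
    rewrite Ropp_mult_distr_l_reverse, additive_opp, additive_INR. ring.
Qed.

Lemma additive_rational z n : f (IZR z / INR (S n)) = IZR z / INR (S n) * f 1.
Proof.
  assert (Hn : 0 < INR (S n)) by apply lt_0_INR, Nat.lt_0_succ.
  pose proof (additive_INR (S n) (IZR z / INR (S n))) as H.
  replace (INR (S n) * (IZR z / INR (S n))) with (IZR z * 1) in H by (field; lra).
  rewrite additive_IZR in H.
  apply (Rmult_eq_reg_l (INR (S n))); [| lra].
  rewrite <- H. field. lra.
Qed.

End Additive.

Lemma is_lim_seq_ceil_approx t :
  is_lim_seq (fun n => IZR (up (INR (S n) * t)) / INR (S n)) t.
Proof.
  assert (Hinv : is_lim_seq (fun n => / INR (S n)) 0).
  { apply (is_lim_seq_incr_1 (fun n => / INR n)).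
    replace (Finite 0) with (Rbar_inv p_infty) by reflexivity.
    apply is_lim_seq_inv; [apply is_lim_seq_INR | discriminate]. }
  apply is_lim_seq_le_le with (fun _ => t) (fun n => t + / INR (S n)).
  - intros n. assert (Hn : 0 < INR (S n)) by apply lt_0_INR, Nat.lt_0_succ.
    destruct (archimed (INR (S n) * t)) as [H1 H2].
    split; apply (Rmult_le_reg_l (INR (S n))); try exact Hn;
      replace (INR (S n) * (IZR (up (INR (S n) * t)) / INR (S n))) with (IZR (up (INR (S n) * t)))
        by (field; lra).
    + lra.
    + replace (INR (S n) * (t + / INR (S n))) with (INR (S n) * t + 1) by (field; lra). lra.
  - apply is_lim_seq_const.
  - replace (Finite t) with (Finite (t + 0)) by (f_equal; ring).
    apply is_lim_seq_plus'; [apply is_lim_seq_const | exact Hinv].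
Qed.

Lemma additive_continuous_linear f : additive f -> (forall t, continuity_pt f t) ->
  forall t, f t = t * f 1.
Proof.
  intros Hf Hc t.
  set (g := fun s => f s - s * f 1).
  assert (Hg : additive g) by (intros s u; unfold g; rewrite Hf; ring).
  assert (Hg1 : g 1 = 0) by (unfold g; ring).
  assert (Hq : forall n, g (IZR (up (INR (S n) * t)) / INR (S n)) = 0)
    by (intros n; rewrite (additive_rational g Hg), Hg1; ring).
  assert (Hlim : is_lim_seq (fun n => g (IZR (up (INR (S n) * t)) / INR (S n))) (g t)).
  { apply is_lim_seq_continuous; [| apply is_lim_seq_ceil_approx].
    apply continuity_pt_minus; [apply Hc |].
    apply continuity_pt_mult; [apply continuity_pt_id | apply continuity_pt_const; intros ? ?; reflexivity]. }
  apply (is_lim_seq_ext _ (fun _ => 0)) in Hlim; [| exact Hq].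
  apply is_lim_seq_unique in Hlim. rewrite Lim_seq_const in Hlim.
  injection Hlim. unfold g. lra.
Qed.

Section RotationHomomorphism.

Variables co si : R -> R.
Hypothesis co_add : forall s t, co (s + t) = co s * co t - si s * si t.
Hypothesis si_add : forall s t, si (s + t) = si s * co t + co s * si t.
Hypothesis co_si_circle : forall t, co t * co t + si t * si t = 1.
Hypothesis co_0 : co 0 = 1.
Hypothesis si_0 : si 0 = 0.
Hypothesis co_continuous : forall t, continuity_pt co t.

Lemma rotation_hom_opp t : co (- t) = co t /\ si (- t) = - si t.
Proof.
  pose proof (co_add t (- t)) as E1. pose proof (si_add t (- t)) as E2.
  rewrite Rplus_opp_r, co_0 in E1. rewrite Rplus_opp_r, si_0 in E2.
  pose proof (co_si_circle t) as C.
  (* [(co (-t), si (-t))] solves a linear system of determinant [1]. *)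
  split.
  - transitivity (co t * (co t * co (- t) - si t * si (- t)) + si t * (si t * co (- t) + co t * si (- t))).
    + transitivity (co (- t) * (co t * co t + si t * si t)); [rewrite C |]; ring.
    + rewrite <- E1, <- E2. ring.
  - transitivity (co t * (si t * co (- t) + co t * si (- t)) - si t * (co t * co (- t) - si t * si (- t))).
    + transitivity (si (- t) * (co t * co t + si t * si t)); [rewrite C |]; ring.
    + rewrite <- E1, <- E2. ring.
Qed.

(* If [co > 0] everywhere, doubling the parameter at least doubles [1 - co], which stays [<= 1]. *)
Lemma rotation_hom_reaches_nonpos : (exists t0, co t0 <> 1) -> exists t, co t <= 0.
Proof.
  intros [t0 Ht0]. apply NNPP. intros Hno.
  assert (Hpos : forall t, 0 < co t) by (intros t; apply Rnot_le_lt; intros Hle; apply Hno; now exists t).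
  assert (Hle1 : forall t, co t <= 1) by (intros t; pose proof (co_si_circle t); nra).
  assert (Ha : 0 < 1 - co t0) by (pose proof (Hle1 t0); lra).
  assert (Hk : forall k, 2 ^ k * (1 - co t0) <= 1 - co (t0 * 2 ^ k)).
  { induction k as [|k IH]; [simpl; rewrite Rmult_1_r; lra |].
    replace (t0 * 2 ^ S k) with (t0 * 2 ^ k + t0 * 2 ^ k) by (simpl; ring).
    rewrite co_add. pose proof (co_si_circle (t0 * 2 ^ k)).
    pose proof (Hpos (t0 * 2 ^ k)). pose proof (Hle1 (t0 * 2 ^ k)). simpl. nra. }
  destruct (pow_lt_1_zero (/ 2) ltac:(rewrite Rabs_right; lra) (1 - co t0) Ha) as [k Hk'].
  specialize (Hk' k (le_n k)). rewrite Rabs_right in Hk' by (apply Rle_ge, pow_le; lra).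
  rewrite pow_inv in Hk'.
  pose proof (Hk k). pose proof (Hpos (t0 * 2 ^ k)).
  assert (H2k : 0 < 2 ^ k) by (apply pow_lt; lra).
  assert (1 < 2 ^ k * (1 - co t0)).
  { apply (Rmult_lt_reg_l (/ 2 ^ k)); [now apply Rinv_0_lt_compat |].
    rewrite <- Rmult_assoc, Rinv_l, Rmult_1_l, Rmult_1_r by lra. exact Hk'. }
  lra.
Qed.

Lemma rotation_hom_surjective : (exists t0, co t0 <> 1) ->
  forall c s, c * c + s * s = 1 -> exists t, co t = c /\ si t = s.
Proof.
  intros Hnt c s Hcs.
  assert (Hco : continuity co) by exact co_continuous.
  destruct (rotation_hom_reaches_nonpos Hnt) as [t1 Ht1].
  assert (Hhalf : exists t2, co t2 = 0).
  { destruct (Rle_dec 0 t1).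
    - destruct (IVT_cor co 0 t1 Hco) as [z [_ Hz]]; [lra | rewrite co_0; lra |]. now exists z.
    - destruct (IVT_cor co t1 0 Hco) as [z [_ Hz]]; [lra | rewrite co_0; lra |]. now exists z. }
  destruct Hhalf as [t2 Ht2].
  set (T := Rabs (t2 + t2)).
  assert (HT : co T = -1).
  { unfold T. destruct (Rle_dec 0 (t2 + t2)).
    - rewrite Rabs_right by lra. rewrite co_add, Ht2. pose proof (co_si_circle t2). nra.
    - rewrite Rabs_left by lra. rewrite (proj1 (rotation_hom_opp _)), co_add, Ht2.
      pose proof (co_si_circle t2). nra. }
  assert (Hc1 : -1 <= c <= 1) by nra.
  destruct (IVT_cor (fun t => co t - c) 0 T) as [z [_ Hz]].
  { intros x. apply continuity_pt_minus; [apply co_continuous | apply continuity_pt_const; intros ? ?; reflexivity]. }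
  { apply Rabs_pos. }
  { rewrite co_0, HT. nra. }
  assert (Hcz : co z = c) by lra.
  assert (Hsz : (si z - s) * (si z + s) = 0) by (pose proof (co_si_circle z); rewrite Hcz in *; nra).
  apply Rmult_integral in Hsz as [Hsz | Hsz].
  - exists z. split; [exact Hcz | lra].
  - exists (- z). destruct (rotation_hom_opp z) as [E1 E2]. rewrite E1, E2. split; lra.
Qed.

End RotationHomomorphism.

Definition isom2_id : isom2 := mkIsom2 1 0 0 1 0 0.

Definition isom2_comp (g h : isom2) : isom2 :=
  mkIsom2 (Q11 g * Q11 h + Q12 g * Q21 h) (Q11 g * Q12 h + Q12 g * Q22 h)
          (Q21 g * Q11 h + Q22 g * Q21 h) (Q21 g * Q12 h + Q22 g * Q22 h)
          (Q11 g * T1 h + Q12 g * T2 h + T1 g) (Q21 g * T1 h + Q22 g * T2 h + T2 g).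

Lemma act_isom2_id p : act isom2_id p = p.
Proof. destruct p as [x y]. unfold act; simpl. f_equal; ring. Qed.

Lemma act_isom2_comp g h p : act (isom2_comp g h) p = act g (act h p).
Proof. destruct p as [x y]. unfold act; simpl. f_equal; ring. Qed.

Lemma isom2_ext g h : (forall p, act g p = act h p) -> g = h.
Proof.
  destruct g as [a b c d u v], h as [a' b' c' d' u' v']. intros H.
  pose proof (H (0, 0)) as H0. pose proof (H (1, 0)) as H1. pose proof (H (0, 1)) as H2.
  unfold act in H0, H1, H2; simpl in H0, H1, H2.
  injection H0 as E1 E2. injection H1 as E3 E4. injection H2 as E5 E6.
  f_equal; lra.
Qed.

(* The determinant of the square is a square, hence [1] rather than [-1]. *)
Lemma orthogonal2_square_rotation g :
  orthogonal2 (isom2_comp g g) ->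
  Q12 (isom2_comp g g) = - Q21 (isom2_comp g g) /\ Q22 (isom2_comp g g) = Q11 (isom2_comp g g).
Proof.
  intros [O1 [O2 O3]].
  set (A := Q11 (isom2_comp g g)) in *. set (B := Q12 (isom2_comp g g)) in *.
  set (C := Q21 (isom2_comp g g)) in *. set (D := Q22 (isom2_comp g g)) in *.
  assert (Hdet : A * D - B * C = (Q11 g * Q22 g - Q12 g * Q21 g) ^ 2) by (unfold A, B, C, D; simpl; ring).
  assert (Hdet2 : (A * D - B * C) ^ 2 = 1).
  { replace ((A * D - B * C) ^ 2) with ((A * A + C * C) * (B * B + D * D) - (A * B + C * D) ^ 2) by ring.
    rewrite O1, O2, O3. ring. }
  assert (H1 : A * D - B * C = 1).
  { assert (0 <= A * D - B * C) by (rewrite Hdet; apply pow2_ge_0). nra. }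
  assert (H2 : (B + C) ^ 2 + (D - A) ^ 2 = 0).
  { replace ((B + C) ^ 2 + (D - A) ^ 2) with ((A * A + C * C) + (B * B + D * D) - 2 * (A * D - B * C)) by ring.
    rewrite O1, O2, H1. ring. }
  pose proof (pow2_ge_0 (B + C)). pose proof (pow2_ge_0 (D - A)).
  simpl in *. split; nra.
Qed.

Definition translation_invariant (V : R * R -> R * R) : Prop :=
  exists e1 e2, e1 * e1 + e2 * e2 = 1 /\ forall tau x y, V (x + tau * e1, y + tau * e2) = V (x, y).

Definition rotation_invariant (V : R * R -> R * R) : Prop :=
  exists c1 c2, forall co si, co * co + si * si = 1 ->
  forall x y, V (c1 + (co * x - si * y), c2 + (si * x + co * y)) =
    (co * fst (V (c1 + x, c2 + y)) - si * snd (V (c1 + x, c2 + y)),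
     si * fst (V (c1 + x, c2 + y)) + co * snd (V (c1 + x, c2 + y))).

Section OneParameterGroup.

Variable phi : R -> isom2.
Hypothesis Hphi : one_param_group phi.

Let co t := Q11 (phi t).
Let si t := Q21 (phi t).
Let u t := T1 (phi t).
Let v t := T2 (phi t).

Lemma one_param_group_0 : phi 0 = isom2_id.
Proof.
  destruct Hphi as [_ [Hid _]]. apply isom2_ext. intros p. now rewrite Hid, act_isom2_id.
Qed.

Lemma one_param_group_add s t : phi (s + t) = isom2_comp (phi s) (phi t).
Proof.
  destruct Hphi as [_ [_ [Hadd _]]]. apply isom2_ext. intros p. now rewrite Hadd, act_isom2_comp.
Qed.

Lemma one_param_group_rotation t : Q12 (phi t) = - si t /\ Q22 (phi t) = co t.
Proof.
  destruct Hphi as [Horth _].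
  replace t with (t / 2 + t / 2) by field. unfold co, si.
  rewrite one_param_group_add. apply orthogonal2_square_rotation.
  rewrite <- one_param_group_add. apply Horth.
Qed.

Lemma act_one_param_group t x y :
  act (phi t) (x, y) = (co t * x - si t * y + u t, si t * x + co t * y + v t).
Proof.
  unfold act; simpl. destruct (one_param_group_rotation t) as [E1 E2]. rewrite E1, E2.
  unfold co, si, u, v. f_equal; ring.
Qed.

Lemma one_param_group_add_coeffs s t :
  co (s + t) = co s * co t - si s * si t /\ si (s + t) = si s * co t + co s * si t /\
  u (s + t) = co s * u t - si s * v t + u s /\ v (s + t) = si s * u t + co s * v t + v s.
Proof.
  unfold co, si, u, v. rewrite one_param_group_add. simpl.
  destruct (one_param_group_rotation s) as [E1 E2]. rewrite E1, E2.
  repeat split; unfold co, si; ring.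
Qed.

Variable V : R * R -> R * R.
Hypothesis HV : forall t, invariant_under (phi t) V.

Lemma one_param_group_invariance t x y :
  V (co t * x - si t * y + u t, si t * x + co t * y + v t) =
  (co t * fst (V (x, y)) - si t * snd (V (x, y)), si t * fst (V (x, y)) + co t * snd (V (x, y))).
Proof.
  rewrite <- act_one_param_group. rewrite (HV t (x, y)). unfold lin.
  destruct (one_param_group_rotation t) as [E1 E2]. rewrite E1, E2.
  unfold co, si. f_equal; ring.
Qed.

(* Without rotations, the translation parts are additive and continuous, hence linear. *)
Lemma one_param_group_translation_invariant : (forall t, co t = 1) -> translation_invariant V.
Proof.
  intros Hco.
  destruct Hphi as [Horth [_ [_ [Hcont [t1 [[x1 y1] Hnt]]]]]].
  assert (Hsi : forall t, si t = 0)
    by (intros t; pose proof (proj1 (Horth t)) as C; change (co t * co t + si t * si t = 1) in C; rewrite Hco in C; nra).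
  assert (Hlin : forall t, u t = t * u 1 /\ v t = t * v 1).
  { intros t. split; apply additive_continuous_linear; try (intros s; apply (Hcont s)); intros s s';
      destruct (one_param_group_add_coeffs s s') as [_ [_ [Hu Hv]]]; rewrite ?Hu, ?Hv, Hco, Hsi; ring. }
  assert (Hw : 0 < u 1 * u 1 + v 1 * v 1).
  { rewrite act_one_param_group, Hco, Hsi, (proj1 (Hlin t1)), (proj2 (Hlin t1)) in Hnt.
    destruct (Req_dec (u 1) 0) as [Eu | Eu]; [destruct (Req_dec (v 1) 0) as [Ev | Ev] |]; [| nra | nra].
    exfalso. apply Hnt. rewrite Eu, Ev. f_equal; ring. }
  set (L := sqrt (u 1 * u 1 + v 1 * v 1)).
  assert (HL : 0 < L) by (now apply sqrt_lt_R0).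
  assert (HL2 : L * L = u 1 * u 1 + v 1 * v 1) by (apply sqrt_sqrt; lra).
  exists (u 1 / L), (v 1 / L). split.
  - replace (u 1 / L * (u 1 / L) + v 1 / L * (v 1 / L)) with ((u 1 * u 1 + v 1 * v 1) / (L * L)) by (field; lra).
    rewrite <- HL2. field. lra.
  - intros tau x y. pose proof (one_param_group_invariance (tau / L) x y) as H.
    rewrite Hco, Hsi, (proj1 (Hlin _)), (proj2 (Hlin _)) in H.
    replace (x + tau * (u 1 / L)) with (1 * x - 0 * y + tau / L * u 1) by (field; lra).
    replace (y + tau * (v 1 / L)) with (0 * x + 1 * y + tau / L * v 1) by (field; lra).
    rewrite H. destruct (V (x, y)) as [p q]. simpl. f_equal; ring.
Qed.

(* [phi t0] has a unique fixed point; [phi t] commutes with [phi t0], so it fixes that point too. *)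
Lemma one_param_group_fixed_point t0 : co t0 <> 1 ->
  exists c1 c2, forall t, act (phi t) (c1, c2) = (c1, c2).
Proof.
  intros Ht0.
  set (a := co t0). set (s := si t0).
  assert (Hle : a <= 1) by (pose proof (proj1 (proj1 Hphi t0)) as C; change (a * a + s * s = 1) in C; nra).
  set (D := (1 - a) * (1 - a) + s * s).
  assert (HD : 0 < D) by (unfold D; assert (0 < 1 - a) by (unfold a in *; lra); nra).
  set (c1 := ((1 - a) * u t0 - s * v t0) / D).
  set (c2 := (s * u t0 + (1 - a) * v t0) / D).
  assert (Hfix : forall p1 p2, act (phi t0) (p1, p2) = (p1, p2) -> p1 = c1 /\ p2 = c2).
  { intros p1 p2 E. rewrite act_one_param_group in E. injection E as E1 E2. fold a s in E1, E2.
    unfold c1, c2. split; apply (Rmult_eq_reg_r D); try lra; unfold Rdiv;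
      rewrite Rmult_assoc, Rinv_l, Rmult_1_r by lra; unfold D; nra. }
  assert (Hc : act (phi t0) (c1, c2) = (c1, c2)).
  { rewrite act_one_param_group. fold a s. unfold c1, c2, D in *. f_equal; field; lra. }
  exists c1, c2. intros t.
  destruct (act (phi t) (c1, c2)) as [p1 p2] eqn:Ep.
  assert (Hp : act (phi t0) (p1, p2) = (p1, p2)).
  { rewrite <- Ep, <- act_isom2_comp, <- one_param_group_add, Rplus_comm,
      one_param_group_add, act_isom2_comp, Hc. reflexivity. }
  apply Hfix in Hp as [-> ->]. reflexivity.
Qed.

Lemma one_param_group_rotation_invariant t0 : co t0 <> 1 -> rotation_invariant V.
Proof.
  intros Ht0.
  destruct Hphi as [Horth [_ [_ [Hcont _]]]].
  destruct (one_param_group_fixed_point t0 Ht0) as [c1 [c2 Hfix]].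
  assert (Hsurj := rotation_hom_surjective co si
    (fun s t => proj1 (one_param_group_add_coeffs s t))
    (fun s t => proj1 (proj2 (one_param_group_add_coeffs s t)))
    (fun t => proj1 (Horth t))
    (f_equal Q11 one_param_group_0) (f_equal Q21 one_param_group_0)
    (fun t => proj1 (Hcont t)) (ex_intro _ t0 Ht0)).
  exists c1, c2. intros c s Hcs x y.
  destruct (Hsurj c s Hcs) as [t [<- <-]].
  pose proof (Hfix t) as Hf. rewrite act_one_param_group in Hf. injection Hf as F1 F2.
  rewrite <- (one_param_group_invariance t (c1 + x) (c2 + y)).
  f_equal; f_equal; lra.
Qed.

End OneParameterGroup.

Lemma additional_symmetry_cases V :
  has_additional_symmetry V -> translation_invariant V \/ rotation_invariant V.
Proof.
  intros [phi [Hphi HV]].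
  destruct (classic (forall t, Q11 (phi t) = 1)) as [Hall | Hex].
  - left. now apply (one_param_group_translation_invariant phi Hphi).
  - right. apply not_all_ex_not in Hex as [t0 Ht0].
    exact (one_param_group_rotation_invariant phi Hphi V HV t0 Ht0).
Qed.

(** * Planar stationary fields *)

Lemma smooth3_line_x F y0 z0 : smooth3 F -> smooth1 (fun t => F t y0 z0).
Proof.
  intros H n x.
  replace (Derive_n (fun t => F t y0 z0) n) with (fun t => iter_pd3 (repeat DX n) F t y0 z0).
  - exact (proj2 (H (repeat DX n)) DX x y0 z0).
  - induction n as [|n IH]; [reflexivity |]. simpl. now rewrite <- IH.
Qed.

Lemma smooth3_line_y F x0 z0 : smooth3 F -> smooth1 (fun t => F x0 t z0).
Proof.
  intros H n y.
  replace (Derive_n (fun t => F x0 t z0) n) with (fun t => iter_pd3 (repeat DY n) F x0 t z0).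
  - exact (proj2 (H (repeat DY n)) DY x0 y z0).
  - induction n as [|n IH]; [reflexivity |]. simpl. now rewrite <- IH.
Qed.

Definition vorticity (B : vfield3) (x y : R) : R :=
  Derive (fun t => Vy B t y 0) x - Derive (fun t => Vx B x t 0) y.

Lemma planar_stationary B : planar B -> stationary B ->
  (forall x y, Derive (fun t => Vx B t y 0) x + Derive (fun t => Vy B x t 0) y = 0) /\
  exists p : R -> R -> R, forall x y,
    is_derive (fun t => p t y) x (- (vorticity B x y * Vy B x y 0)) /\
    is_derive (fun t => p x t) y (vorticity B x y * Vx B x y 0).
Proof.
  intros [Hz _] [Hdiv [p Hp]]. split.
  - intros x y. pose proof (Hdiv x y 0) as H. unfold divergence, pd3 in H.
    rewrite (Derive_ext (fun t => Vz B x y t) (fun _ => 0)), Derive_const in H by (intros; apply Hz).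
    lra.
  - exists (fun x y => p x y 0). intros x y.
    destruct (Hp x y 0) as [Hx [Hy _]]. simpl in Hx, Hy. rewrite !Hz in Hx, Hy.
    split.
    + eapply is_derive_Rext; [intros; reflexivity | | exact Hx].
      unfold vorticity, pd3; ring.
    + eapply is_derive_Rext; [intros; reflexivity | | exact Hy].
      unfold vorticity, pd3; ring.
Qed.

Lemma smooth1_plane_wave_profile (F : R -> R -> R) (A : R -> R) n1 n2 :
  n1 * n1 + n2 * n2 = 1 -> (forall x y, F x y = A (n1 * x + n2 * y)) ->
  (forall y, smooth1 (fun t => F t y)) -> (forall x, smooth1 (fun t => F x t)) -> smooth1 A.
Proof.
  intros Hn HF Hx Hy. destruct (Req_dec n1 0) as [H0 | H0].
  - assert (Hn2 : n2 * n2 = 1) by (rewrite H0 in Hn; lra).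
    apply (smooth1_ext (fun s => F 0 (n2 * s + 0))); [| apply (smooth1_comp_affine _ _ (fun t => F 0 t)), Hy].
    intros s. rewrite HF, H0. f_equal. transitivity (s * (n2 * n2)); [ring | rewrite Hn2; ring].
  - apply (smooth1_ext (fun s => F (/ n1 * s + 0) 0)); [| apply (smooth1_comp_affine _ _ (fun t => F t 0)), Hx].
    intros s. rewrite HF. f_equal. field. exact H0.
Qed.

Lemma Derive_plane_wave (F : R -> R -> R) (A : R -> R) n1 n2 x y :
  smooth1 A -> (forall x y, F x y = A (n1 * x + n2 * y)) ->
  Derive (fun t => F t y) x = n1 * Derive A (n1 * x + n2 * y) /\
  Derive (fun t => F x t) y = n2 * Derive A (n1 * x + n2 * y).
Proof.
  intros HA HF. split.
  - rewrite (Derive_ext _ (fun t => A (n1 * t + n2 * y))) by (intros; apply HF).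
    apply Derive_comp_affine, smooth1_ex_derive, HA.
  - rewrite (Derive_ext _ (fun t => A (n2 * t + n1 * x))) by (intros; rewrite HF; f_equal; ring).
    rewrite Derive_comp_affine by apply smooth1_ex_derive, HA.
    now replace (n2 * y + n1 * x) with (n1 * x + n2 * y) by ring.
Qed.

(* Subtracting [int_0^(n1 x + n2 y) P1 / n1] leaves a function of [y] alone, whose
   derivative [P2 - n2 P1 / n1] is therefore constant along the wave. *)
Lemma plane_wave_gradient_aux (p : R -> R -> R) (P1 P2 : R -> R) n1 n2 : n1 <> 0 ->
  (forall s, continuity_pt P1 s) ->
  (forall x y, is_derive (fun t => p t y) x (P1 (n1 * x + n2 * y))) ->
  (forall x y, is_derive (fun t => p x t) y (P2 (n1 * x + n2 * y))) ->
  forall s, n1 * P2 s - n2 * P1 s = n1 * P2 0 - n2 * P1 0.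
Proof.
  intros Hn1 HP1 Hx Hy s.
  set (Phi := fun b => RInt P1 0 b).
  assert (HPhi : forall b, is_derive Phi b (P1 b)).
  { intros b. apply (is_derive_RInt P1 Phi 0 b).
    - apply filter_forall. intros c. apply (RInt_correct (V := R_CompleteNormedModule)).
      apply ex_RInt_Rcontinuous. intros z _. apply continuity_pt_filterlim, HP1.
    - apply continuity_pt_filterlim, HP1. }
  set (E := fun x y => p x y - Phi (n1 * x + n2 * y) / n1).
  assert (HE0 : forall x y, E x y = E 0 y).
  { intros x y. apply (zero_derive_const (fun t => E t y)). intros t.
    assert (H1 : is_derive (fun t => n1 * t + n2 * y) t n1) by (auto_derive; [exact I | ring]).
    refine (is_derive_Rext _ _ t _ _ _ _ (is_derive_Rplus _ _ t _ _ (Hx t y)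
              (is_derive_scal _ t (- / n1) _ (is_derive_Rcomp Phi _ t _ _ (HPhi _) H1)))).
    - intros z. unfold E. field. exact Hn1.
    - field. exact Hn1. }
  assert (HEy : forall x y, is_derive (fun t => E x t) y (P2 (n1 * x + n2 * y) - n2 / n1 * P1 (n1 * x + n2 * y))).
  { intros x y.
    assert (H1 : is_derive (fun t => n1 * x + n2 * t) y n2) by (auto_derive; [exact I | ring]).
    refine (is_derive_Rext _ _ y _ _ _ _ (is_derive_Rplus _ _ y _ _ (Hy x y)
              (is_derive_scal _ y (- / n1) _ (is_derive_Rcomp Phi _ y _ _ (HPhi _) H1)))).
    - intros z. unfold E. field. exact Hn1.
    - field. exact Hn1. }
  assert (A1 := is_derive_unique _ _ _ (HEy (s / n1) 0)).
  assert (A2 : is_derive (fun t => E (s / n1) t) 0 (P2 (n1 * 0 + n2 * 0) - n2 / n1 * P1 (n1 * 0 + n2 * 0)))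
    by (refine (is_derive_Rext _ _ 0 _ _ _ eq_refl (HEy 0 0)); intros; symmetry; apply HE0).
  rewrite (is_derive_unique _ _ _ A2) in A1.
  replace (n1 * (s / n1) + n2 * 0) with s in A1 by (field; exact Hn1).
  replace (n1 * 0 + n2 * 0) with 0 in A1 by ring.
  apply (Rmult_eq_reg_r (/ n1)); [| now apply Rinv_neq_0_compat].
  replace ((n1 * P2 s - n2 * P1 s) * / n1) with (P2 s - n2 / n1 * P1 s) by (field; exact Hn1).
  replace ((n1 * P2 0 - n2 * P1 0) * / n1) with (P2 0 - n2 / n1 * P1 0) by (field; exact Hn1).
  symmetry. exact A1.
Qed.

Lemma plane_wave_gradient (p : R -> R -> R) (P1 P2 : R -> R) n1 n2 : n1 * n1 + n2 * n2 = 1 ->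
  (forall s, continuity_pt P1 s) -> (forall s, continuity_pt P2 s) ->
  (forall x y, is_derive (fun t => p t y) x (P1 (n1 * x + n2 * y))) ->
  (forall x y, is_derive (fun t => p x t) y (P2 (n1 * x + n2 * y))) ->
  forall s, n1 * P2 s - n2 * P1 s = n1 * P2 0 - n2 * P1 0.
Proof.
  intros Hn HP1 HP2 Hx Hy s. destruct (Req_dec n1 0) as [H0 | H0].
  - assert (Hn2 : n2 <> 0) by (intros E; rewrite E, H0 in Hn; lra).
    pose proof (plane_wave_gradient_aux (fun x y => p y x) P2 P1 n2 n1 Hn2 HP2) as H.
    assert (Hs := H ltac:(intros x y; rewrite Rplus_comm; apply Hy)
                    ltac:(intros x y; rewrite Rplus_comm; apply Hx) s).
    lra.
  - exact (plane_wave_gradient_aux p P1 P2 n1 n2 H0 HP1 Hx Hy s).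
Qed.

Definition normal_form (V : R * R -> R * R) : Prop :=
  exists g : isom2, orthogonal2 g /\ exists W : R * R -> R * R,
    pushforward_eq g V W /\ (form_shear W \/ form_affine W \/ form_rotational W).

Section TranslationCase.

Variables (B : vfield3) (e1 e2 : R).
Hypotheses (HB : smooth_vf3 B) (Hst : stationary B) (Hpl : planar B).
Hypothesis He : e1 * e1 + e2 * e2 = 1.
Hypothesis HT : forall tau x y, planar_part B (x + tau * e1, y + tau * e2) = planar_part B (x, y).

(* The profiles along the line through [0] normal to the direction [(e1, e2)] of invariance. *)
Let A1 s := Vx B (- s * e2) (s * e1) 0.
Let A2 s := Vy B (- s * e2) (s * e1) 0.

Lemma planar_part_plane_wave x y :
  Vx B x y 0 = A1 (- e2 * x + e1 * y) /\ Vy B x y 0 = A2 (- e2 * x + e1 * y).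
Proof.
  set (s := - e2 * x + e1 * y). set (tau := e1 * x + e2 * y).
  pose proof (HT tau (- s * e2) (s * e1)) as H. unfold planar_part in H. simpl in H.
  replace (- s * e2 + tau * e1) with x in H
    by (transitivity (x * (e1 * e1 + e2 * e2)); [rewrite He | unfold s, tau]; ring).
  replace (s * e1 + tau * e2) with y in H
    by (transitivity (y * (e1 * e1 + e2 * e2)); [rewrite He | unfold s, tau]; ring).
  injection H as E1 E2. split; [exact E1 | exact E2].
Qed.

Lemma smooth1_plane_wave_profiles : smooth1 A1 /\ smooth1 A2.
Proof.
  destruct HB as [Sx [Sy _]]. split.
  - apply (smooth1_plane_wave_profile (fun x y => Vx B x y 0) A1 (- e2) e1).
    + rewrite <- He. ring.
    + intros x y. apply planar_part_plane_wave.
    + intros y. now apply smooth3_line_x.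
    + intros x. now apply smooth3_line_y.
  - apply (smooth1_plane_wave_profile (fun x y => Vy B x y 0) A2 (- e2) e1).
    + rewrite <- He. ring.
    + intros x y. apply planar_part_plane_wave.
    + intros y. now apply smooth3_line_x.
    + intros x. now apply smooth3_line_y.
Qed.

Let a s := e1 * A1 s + e2 * A2 s.
Let b s := - e2 * A1 s + e1 * A2 s.

Lemma Derive_plane_wave_profiles x y :
  let s := - e2 * x + e1 * y in
  Derive (fun t => Vx B t y 0) x = - e2 * Derive A1 s /\ Derive (fun t => Vx B x t 0) y = e1 * Derive A1 s /\
  Derive (fun t => Vy B t y 0) x = - e2 * Derive A2 s /\ Derive (fun t => Vy B x t 0) y = e1 * Derive A2 s.
Proof.
  destruct smooth1_plane_wave_profiles as [S1 S2].
  destruct (Derive_plane_wave (fun x y => Vx B x y 0) A1 (- e2) e1 x y S1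
              (fun x y => proj1 (planar_part_plane_wave x y))) as [D1 D2].
  destruct (Derive_plane_wave (fun x y => Vy B x y 0) A2 (- e2) e1 x y S2
              (fun x y => proj2 (planar_part_plane_wave x y))) as [D3 D4].
  easy.
Qed.

Lemma plane_wave_normal_const s : b s = b 0.
Proof.
  destruct smooth1_plane_wave_profiles as [S1 S2].
  apply (zero_derive_const b). intros t.
  destruct (planar_stationary B Hpl Hst) as [Hdiv _].
  pose proof (Hdiv (- e2 * t) (e1 * t)) as H.
  destruct (Derive_plane_wave_profiles (- e2 * t) (e1 * t)) as [D1 [_ [_ D4]]].
  replace (- e2 * (- e2 * t) + e1 * (e1 * t)) with t in D1, D4
    by (transitivity (t * (e1 * e1 + e2 * e2)); [rewrite He |]; ring).
  rewrite D1, D4 in H.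
  refine (is_derive_Rext _ _ t _ _ (fun _ => eq_refl) _
            (is_derive_Rplus _ _ t _ _ (is_derive_scal _ t (- e2) _ (Derive_correct _ _ (smooth1_ex_derive A1 t S1)))
                                      (is_derive_scal _ t e1 _ (Derive_correct _ _ (smooth1_ex_derive A2 t S2))))).
  lra.
Qed.

(* The vorticity is [- a'], so the pressure gradient is [a' (A2, - A1)]. *)
Lemma plane_wave_pressure : exists C, forall s, Derive a s * b s = C.
Proof.
  destruct smooth1_plane_wave_profiles as [S1 S2].
  destruct (planar_stationary B Hpl Hst) as [_ [p Hp]].
  assert (Ha' : forall s, Derive a s = e1 * Derive A1 s + e2 * Derive A2 s).
  { intros s. apply is_derive_unique, is_derive_Rplus; apply is_derive_scal, Derive_correct;
      now apply smooth1_ex_derive. }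
  assert (Hvort : forall x y, vorticity B x y = - Derive a (- e2 * x + e1 * y)).
  { intros x y. unfold vorticity. rewrite Ha'.
    destruct (Derive_plane_wave_profiles x y) as [_ [D2 [D3 _]]]. rewrite D2, D3. ring. }
  assert (Hcont : forall s, continuity_pt (Derive a) s).
  { intros s. apply smooth1_continuity_pt, smooth1_Derive.
    apply smooth1_plus; apply smooth1_scal; assumption. }
  assert (Hpx : forall x y, is_derive (fun t => p t y) x (Derive a (- e2 * x + e1 * y) * A2 (- e2 * x + e1 * y))).
  { intros x y. refine (is_derive_Rext _ _ x _ _ (fun _ => eq_refl) _ (proj1 (Hp x y))).
    rewrite Hvort, (proj2 (planar_part_plane_wave x y)). ring. }
  assert (Hpy : forall x y, is_derive (fun t => p x t) y (- (Derive a (- e2 * x + e1 * y) * A1 (- e2 * x + e1 * y)))).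
  { intros x y. refine (is_derive_Rext _ _ y _ _ (fun _ => eq_refl) _ (proj2 (Hp x y))).
    rewrite Hvort, (proj1 (planar_part_plane_wave x y)). ring. }
  pose proof (plane_wave_gradient p (fun s => Derive a s * A2 s) (fun s => - (Derive a s * A1 s)) (- e2) e1
    ltac:(rewrite <- He; ring)
    ltac:(intros s; apply continuity_pt_mult; [apply Hcont | now apply smooth1_continuity_pt])
    ltac:(intros s; apply continuity_pt_opp, continuity_pt_mult; [apply Hcont | now apply smooth1_continuity_pt])
    Hpx Hpy) as H.
  exists (- (- e2 * - (Derive a 0 * A1 0) - e1 * (Derive a 0 * A2 0))). intros s.
  rewrite <- (H s). unfold b. ring.
Qed.

Lemma translation_case : normal_form (planar_part B).
Proof.
  destruct smooth1_plane_wave_profiles as [S1 S2].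
  exists (mkIsom2 e1 e2 (- e2) e1 0 0). split.
  { unfold orthogonal2. simpl. repeat split; nra. }
  exists (fun q => (a (snd q), b (snd q))). split.
  { intros [x y]. unfold act, lin, planar_part. simpl.
    destruct (planar_part_plane_wave x y) as [-> ->].
    replace (- e2 * x + e1 * y + 0) with (- e2 * x + e1 * y) by ring. unfold a, b. f_equal; ring. }
  destruct plane_wave_pressure as [C HC].
  destruct (Req_dec (b 0) 0) as [Hb0 | Hb0].
  - left. exists a. split; [apply smooth1_plus; apply smooth1_scal; assumption |].
    intros x y. simpl. now rewrite plane_wave_normal_const, Hb0.
  - right. left. exists (C / b 0), (a 0), (b 0). intros x y. simpl. rewrite (plane_wave_normal_const y).
    f_equal. apply (const_derive_affine a (C / b 0)). intros t.
    refine (is_derive_Rext _ _ t _ _ (fun _ => eq_refl) _ (Derive_correct _ _ _)).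
    + rewrite <- (HC t), (plane_wave_normal_const t). field. exact Hb0.
    + apply ex_derive_Rplus; apply ex_derive_scal; now apply smooth1_ex_derive.
Qed.

End TranslationCase.

(* [r al r] has derivative [0] on [r > 0] and vanishes at [r = 0]. *)
Lemma radial_ode_zero (al : R -> R) : smooth1 al ->
  (forall r, 0 < r -> Derive al r + al r / r = 0) -> forall r, 0 < r -> al r = 0.
Proof.
  intros Hs Hode r Hr.
  set (k := fun x => x * al x).
  destruct (MVT_gen k 0 r (fun _ => 0)) as [xi [_ Hxi]].
  - rewrite Rmin_left, Rmax_right by lra. intros x Hx.
    refine (is_derive_Rext _ _ x _ _ (fun _ => eq_refl) _
              (is_derive_Rmult _ _ x _ _ (is_derive_Rid x) (Derive_correct _ _ (smooth1_ex_derive al x Hs)))).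
    pose proof (Hode x ltac:(lra)) as H.
    apply (Rmult_eq_reg_r (/ x)); [| apply Rinv_neq_0_compat; lra].
    rewrite Rmult_0_l, <- H. field. lra.
  - intros x _. apply smooth1_continuity_pt, smooth1_mult; [apply smooth1_id | exact Hs].
  - unfold k in Hxi. rewrite Rmult_0_l, Rmult_0_l, Rminus_0_r in Hxi.
    apply Rmult_integral in Hxi as [H | H]; lra.
Qed.

Section RotationCase.

Variables (B : vfield3) (c1 c2 : R).
Hypotheses (HB : smooth_vf3 B) (Hst : stationary B) (Hpl : planar B).
Hypothesis HR : forall co si, co * co + si * si = 1 -> forall x y,
  planar_part B (c1 + (co * x - si * y), c2 + (si * x + co * y)) =
  (co * fst (planar_part B (c1 + x, c2 + y)) - si * snd (planar_part B (c1 + x, c2 + y)),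
   si * fst (planar_part B (c1 + x, c2 + y)) + co * snd (planar_part B (c1 + x, c2 + y))).

Let U1 x y := Vx B (c1 + x) (c2 + y) 0.
Let U2 x y := Vy B (c1 + x) (c2 + y) 0.
(* Radial and angular components along the positive [x]-axis from the centre. *)
Let al r := U1 r 0.
Let be r := U2 r 0.

Lemma rotation_invariance co si x y : co * co + si * si = 1 ->
  U1 (co * x - si * y) (si * x + co * y) = co * U1 x y - si * U2 x y /\
  U2 (co * x - si * y) (si * x + co * y) = si * U1 x y + co * U2 x y.
Proof. intros Hcs. pose proof (HR co si Hcs x y) as H. unfold planar_part in H. simpl in H. now injection H. Qed.

Lemma smooth1_radial_angular : smooth1 al /\ smooth1 be.
Proof.
  destruct HB as [Sx [Sy _]].
  split; [apply (smooth1_ext (fun r => Vx B (1 * r + c1) (c2 + 0) 0)) |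
          apply (smooth1_ext (fun r => Vy B (1 * r + c1) (c2 + 0) 0))];
    try (intros r; unfold al, be, U1, U2; f_equal; ring);
    apply (smooth1_comp_affine _ _ (fun t => _ B t (c2 + 0) 0)), smooth3_line_x; assumption.
Qed.

Lemma radial_angular_odd x : al (- x) = - al x /\ be (- x) = - be x.
Proof.
  destruct (rotation_invariance (-1) 0 x 0 ltac:(ring)) as [E1 E2].
  replace (-1 * x - 0 * 0) with (- x) in E1, E2 by ring.
  replace (0 * x + -1 * 0) with 0 in E1, E2 by ring.
  unfold al, be. split; lra.
Qed.

Lemma rotation_invariant_polar x y : 0 < x * x + y * y ->
  let rho := sqrt (x * x + y * y) in
  U1 x y = (x * al rho - y * be rho) / rho /\ U2 x y = (y * al rho + x * be rho) / rho.
Proof.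
  intros Hxy rho.
  assert (Hr : 0 < rho) by (now apply sqrt_lt_R0).
  assert (Hr2 : rho * rho = x * x + y * y) by (apply sqrt_sqrt; lra).
  destruct (rotation_invariance (x / rho) (y / rho) rho 0) as [E1 E2].
  { replace (x / rho * (x / rho) + y / rho * (y / rho)) with ((x * x + y * y) / (rho * rho)) by (field; lra).
    rewrite Hr2. field. lra. }
  replace (x / rho * rho - y / rho * 0) with x in E1, E2 by (field; lra).
  replace (y / rho * rho + x / rho * 0) with y in E1, E2 by (field; lra).
  unfold al, be. rewrite E1, E2. split; field; lra.
Qed.

Lemma radial_ode r : 0 < r -> Derive al r + al r / r = 0.
Proof.
  intros Hr. destruct smooth1_radial_angular as [Sal Sbe].
  assert (HdU2 : is_derive (U2 r) 0 (al r / r)).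
  { apply (is_derive_ext (fun t => (t * al (sqrt (r * r + t * t)) + r * be (sqrt (r * r + t * t))) / sqrt (r * r + t * t))).
    - intros t. symmetry. apply (rotation_invariant_polar r t). nra.
    - auto_derive; replace (r * r + 0 * 0) with (r * r) by ring; rewrite sqrt_square by lra.
      + repeat split; try (apply smooth1_ex_derive; assumption); nra.
      + field. lra. }
  destruct (planar_stationary B Hpl Hst) as [Hdiv _].
  pose proof (Hdiv (c1 + r) c2) as H.
  rewrite (Derive_ext (fun t => Vx B t c2 0) (fun t => al (1 * t + - c1))),
          Derive_comp_affine in H by (try apply smooth1_ex_derive, Sal; intros; unfold al, U1; f_equal; ring).
  rewrite (Derive_ext (fun t => Vy B (c1 + r) t 0) (fun t => U2 r (1 * t + - c2))),
          Derive_comp_affine in H by (try (exists (al r / r); replace (1 * c2 + - c2) with 0 by ring; exact HdU2);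
                                      intros; unfold U2; f_equal; ring).
  replace (1 * (c1 + r) + - c1) with r in H by ring. replace (1 * c2 + - c2) with 0 in H by ring.
  rewrite (is_derive_unique _ _ _ HdU2) in H. lra.
Qed.

Lemma rotation_case : normal_form (planar_part B).
Proof.
  destruct smooth1_radial_angular as [Sal Sbe].
  assert (Hal : forall r, 0 < r -> al r = 0) by exact (radial_ode_zero al Sal radial_ode).
  destruct (odd_smooth_decomposition be Sbe (fun x => proj2 (radial_angular_odd x))) as [G [SG HG]].
  exists (mkIsom2 1 0 0 1 (- c1) (- c2)). split.
  { unfold orthogonal2. simpl. repeat split; ring. }
  exists (fun q => (U1 (fst q) (snd q), U2 (fst q) (snd q))). split.
  { intros [p1 p2]. unfold act, lin, planar_part, U1, U2. simpl.
    replace (c1 + (1 * p1 + 0 * p2 + - c1)) with p1 by ring.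
    replace (c2 + (0 * p1 + 1 * p2 + - c2)) with p2 by ring. f_equal; ring. }
  right. right. exists G. split; [exact SG |]. intros x y. simpl.
  destruct (Req_dec (x * x + y * y) 0) as [H0 | H0].
  - assert (x = 0) by nra. assert (y = 0) by nra. subst x y.
    destruct (radial_angular_odd 0) as [E1 E2]. rewrite Ropp_0 in E1, E2.
    change (U1 0 0) with (al 0). change (U2 0 0) with (be 0).
    f_equal; lra.
  - destruct (rotation_invariant_polar x y ltac:(nra)) as [E1 E2]. rewrite E1, E2.
    set (rho := sqrt (x * x + y * y)).
    assert (Hr : 0 < rho) by (apply sqrt_lt_R0; nra).
    assert (Hr2 : rho * rho = x * x + y * y) by (apply sqrt_sqrt; nra).
    rewrite (Hal rho Hr), (HG rho).
    replace (rho ^ 2) with (x ^ 2 + y ^ 2) by (simpl; nra).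
    replace (x * (x * 1) + y * (y * 1)) with (x ^ 2 + y ^ 2) by ring.
    f_equal; field; lra.
Qed.

End RotationCase.

Theorem proposition1p2 (B : vfield3) :
  smooth_vf3 B ->
  stationary B ->
  planar B ->
  has_additional_symmetry (planar_part B) ->
  exists g : isom2, orthogonal2 g /\
    exists W : R * R -> R * R,
      pushforward_eq g (planar_part B) W /\
      (form_shear W \/ form_affine W \/ form_rotational W).
Proof.
  intros HB Hst Hpl Hsym.
  destruct (additional_symmetry_cases _ Hsym) as [[e1 [e2 [He HT]]] | [c1 [c2 HR]]].
  - exact (translation_case B e1 e2 HB Hst Hpl He HT).
  - exact (rotation_case B c1 c2 HB Hst Hpl HR).
Qed.
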